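(* Let $k\ge2$, $L\ge3$, and let $T:\Pi_L\to\Sigma_k$ be the map constructed below (with $\Pi=\Pi_L$). If $y\in Trans(\Pi_L)$, then $\omega_\xi(T(y))=\omega_\xi(y)$ for each $\xi\in\{\overline d,\underline d,B^*,B_*\}$, and $\omega_\sigma(y)\subsetneq\omega_\sigma(T(y))$.
   Context: $\Sigma_k=\{0,\dots,k-1\}^{\mathbb{N}}$ with metric $d(x,y)=\sum_{n\ge1}\delta(x_n,y_n)/2^n$ ($\delta(a,b)=0$ if $a=b$, $1$ otherwise) and shift $\sigma$. $\Pi_L=\{x\in\Sigma_k:$ no $L$ consecutive symbols of $x$ are all equal$\}$; $Trans(\Pi_L)=\{y\in\Pi_L:\omega_\sigma(y)=\Pi_L\}$. A finite word is contained in $\Pi$ if it is a prefix of some point of $\Pi$. Construction of $T$: enumerate all finite words contained in $\Pi$ as $C_1,C_2,\dots$; fix a finite word $A_1$ not contained in $\Pi$; for $y\in\Pi$ let $Y_n$ be its first $n$ symbols; $B_n=C_nY_n\cdots Y_n$ ($Y_n$ repeated $|A_n|^2$ times), $A_{n+1}=A_nB_nA_n$; $T(y)$ is the point having every $A_n$ as prefix; the construction requires $|C_n|=o(|A_n|)$. $N(x,U)=\{n\ge1:\sigma^nx\in U\}$; $\overline d,\underline d$ are upper/lower asymptotic densities, $B^*,B_*$ Banach upper/lower densities; $\omega_\xi(x)=\{z:\xi(N(x,B_\varepsilon(z)))>0\ \forall\varepsilon>0\}$; $\omega_\sigma$ the $\omega$-limit set. *)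

From Stdlib Require Import Reals Lra Lia List Arith Classical ClassicalDescription.
From Coquelicot Require Import Coquelicot.
Open Scope R_scope.

(* Points of Sigma_k are sequences nat -> nat; index i (0-based) stands for
   the paper's coordinate x_{i+1}. *)
Definition seqn := nat -> nat.

Definition inSigma (k : nat) (x : seqn) : Prop := forall i, (x i < k)%nat.

Definition shift (x : seqn) : seqn := fun i => x (S i).
Definition shiftn (n : nat) (x : seqn) : seqn := fun i => x (i + n)%nat.

Definition delta (a b : nat) : R := if Nat.eq_dec a b then 0 else 1.
Definition dist (x y : seqn) : R :=
  Series (fun i => delta (x i) (y i) / 2 ^ (S i)).

Definition ball (z : seqn) (eps : R) (x : seqn) : Prop := dist x z < eps.

Definition PiL (k L : nat) (x : seqn) : Prop :=
  inSigma k x /\ forall i, ~ (forall j, (j < L)%nat -> x (i + j)%nat = x i).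

Definition word_in (P : seqn -> Prop) (w : list nat) : Prop :=
  exists x, P x /\ forall i, (i < length w)%nat -> x i = nth i w 0%nat.

Definition omega_sigma (x : seqn) (z : seqn) : Prop :=
  forall eps, 0 < eps -> forall N, exists n, (N <= n)%nat /\ dist (shiftn n x) z < eps.

Definition Trans (k L : nat) (y : seqn) : Prop :=
  PiL k L y /\ forall z, omega_sigma y z <-> PiL k L z.

Definition visits (x : seqn) (U : seqn -> Prop) (n : nat) : Prop :=
  (1 <= n)%nat /\ U (shiftn n x).

Definition indic (P : Prop) : R := if excluded_middle_informative P then 1 else 0.
Fixpoint cnt (A : nat -> Prop) (a n : nat) : R :=
  match n with
  | O => 0
  | S n' => indic (A (a + n')%nat) + cnt A a n'
  end.

Inductive dens_kind := UpperD | LowerD | BanachUpper | BanachLower.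

Definition density (xi : dens_kind) (A : nat -> Prop) : Rbar :=
  match xi with
  | UpperD => LimSup_seq (fun n => cnt A 1 (S n) / INR (S n))
  | LowerD => LimInf_seq (fun n => cnt A 1 (S n) / INR (S n))
  | BanachUpper =>
      Lim_seq (fun n => real (Sup_seq (fun m => cnt A (S m) (S n) / INR (S n))))
  | BanachLower =>
      Lim_seq (fun n => real (Inf_seq (fun m => cnt A (S m) (S n) / INR (S n))))
  end.

Definition omega_xi (k : nat) (xi : dens_kind) (x : seqn) (z : seqn) : Prop :=
  inSigma k z /\
  forall eps, 0 < eps -> Rbar_lt (Finite 0) (density xi (visits x (ball z eps))).

(* ---- construction of T ----
   C m is the paper's C_{m+1}; Aw C A1 y m is the paper's A_{m+1}. *)
Definition prefixw (y : seqn) (n : nat) : list nat := map y (seq 0 n).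

Fixpoint Aw (C : nat -> list nat) (A1 : list nat) (y : seqn) (m : nat) : list nat :=
  match m with
  | O => A1
  | S m' =>
      let a := Aw C A1 y m' in
      let b := C m' ++ concat (repeat (prefixw y (S m')) (length a * length a)) in
      a ++ b ++ a
  end.

(* T(y): the point having every A_n as a prefix (A_{i+2} has length > i) *)
Definition Tmap (C : nat -> list nat) (A1 : list nat) (y : seqn) : seqn :=
  fun i => nth i (Aw C A1 y (S i)) 0%nat.

(** Write [t = T(y)].  Each word [A_(n+1) = A_n C_n Y_n^(|A_n|^2) A_n] is
    dominated by its run of copies of [Y_n]: since [|C_n| = o(|A_n|)], the
    blocks [A_n] and [C_n] fill a vanishing proportion of every long initial
    segment of [t], while inside a run a fixed word occurs as often as in [y],
    up to one occurrence per copy.  So a prefix of [z] occurs in [t] with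
    positive upper (lower) density iff it does so in [y].

    Both [y] and [t] contain every word of [Pi_L].  Following a periodic point
    of [Pi_L] through [z], both visit every neighbourhood of a point of [Pi_L]
    with positive Banach upper density; following one that avoids the 4-prefix
    of [z], the Banach lower density is always zero.  A point outside [Pi_L]
    contains [L] equal consecutive symbols, which occur neither in [y] nor in
    any [C_n]; in [t] they come only from the copies of [A_1] and from the seams
    between copies of [Y_n], and an induction over the words [A_n] shows that
    such occurrences have zero Banach density in [t].

    Finally [t] contains each [C_n], hence every word of [Pi_L], infinitely
    often, and it returns to its own prefixes through the second copy of [A_n]
    in each [A_(n+1)]; but [t] starts with [A_1], so [t] is not in
    [Pi_L = omega_sigma(y)]. *)

From Pilot Require Import Defs.
From Stdlib Require Import Reals Lra Lia List Arith Classical ClassicalDescription.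
From Coquelicot Require Import Coquelicot.
Open Scope R_scope.

(** * Counting functions *)

Lemma indic_bounds (P : Prop) : 0 <= indic P <= 1.
Proof. unfold indic; destruct excluded_middle_informative; lra. Qed.

Lemma indic_true (P : Prop) : P -> indic P = 1.
Proof. unfold indic; destruct excluded_middle_informative; tauto. Qed.

Lemma indic_false (P : Prop) : ~ P -> indic P = 0.
Proof. unfold indic; destruct excluded_middle_informative; tauto. Qed.

Lemma cnt_0 A a : cnt A a 0 = 0.
Proof. reflexivity. Qed.

Lemma cnt_add A a n m : cnt A a (n + m) = cnt A a n + cnt A (a + n) m.
Proof.
  induction m as [|m IH]; simpl.
  - rewrite Nat.add_0_r; lra.
  - rewrite Nat.add_succ_r; simpl. rewrite IH, Nat.add_assoc. lra.
Qed.

Lemma cnt_bounds A a n : 0 <= cnt A a n <= INR n.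
Proof.
  induction n as [|n IH]; cbn [cnt]; [simpl; lra|].
  rewrite S_INR. pose proof (indic_bounds (A (a + n)%nat)). lra.
Qed.

Lemma cnt_mono (A B : nat -> Prop) a n :
  (forall i, (i < n)%nat -> A (a + i)%nat -> B (a + i)%nat) -> cnt A a n <= cnt B a n.
Proof.
  induction n as [|n IH]; simpl; intros H; [lra|].
  assert (cnt A a n <= cnt B a n) by (apply IH; intros; apply H; [lia|assumption]).
  destruct (classic (A (a + n)%nat)) as [HA|HA].
  - rewrite indic_true, (indic_true (B _)) by auto. lra.
  - rewrite indic_false by auto. pose proof (indic_bounds (B (a + n)%nat)). lra.
Qed.

Lemma cnt_ext (A B : nat -> Prop) a b n :
  (forall i, (i < n)%nat -> (A (a + i)%nat <-> B (b + i)%nat)) -> cnt A a n = cnt B b n.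
Proof.
  induction n as [|n IH]; simpl; intros H; [lra|].
  rewrite IH by (intros; apply H; lia).
  destruct (classic (A (a + n)%nat)) as [HA|HA].
  - rewrite !indic_true by (auto; apply H; auto). lra.
  - rewrite !indic_false by (auto; rewrite <- H; auto). lra.
Qed.

Lemma cnt_zero (A : nat -> Prop) a n :
  (forall i, (i < n)%nat -> ~ A (a + i)%nat) -> cnt A a n = 0.
Proof.
  induction n as [|n IH]; simpl; intros H; [lra|].
  rewrite IH, indic_false by (intros; apply H; lia). lra.
Qed.

Lemma cnt_le_subwindow A a n a' n' :
  (a' <= a)%nat -> (a + n <= a' + n')%nat -> cnt A a n <= cnt A a' n'.
Proof.
  intros H1 H2. replace n' with ((a - a') + (n + (n' - (a - a') - n)))%nat by lia.
  rewrite !cnt_add. replace (a' + (a - a'))%nat with a by lia.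
  pose proof (cnt_bounds A a' (a - a')). pose proof (cnt_bounds A (a + n) (n' - (a - a') - n)).
  lra.
Qed.

Lemma cnt_le_len A a n n' : (n <= n')%nat -> cnt A a n <= cnt A a n'.
Proof. intros H. apply cnt_le_subwindow; lia. Qed.

Lemma cnt_le_of_agree (A B : nat -> Prop) a b n d :
  (forall i, (i + d < n)%nat -> (A (a + i)%nat <-> B (b + i)%nat)) ->
  cnt A a n <= cnt B b n + INR d.
Proof.
  intros H. destruct (le_lt_dec n d) as [Hd|Hd].
  - pose proof (cnt_bounds A a n). pose proof (cnt_bounds B b n). apply le_INR in Hd. lra.
  - replace n with ((n - d) + d)%nat by lia. rewrite !cnt_add.
    rewrite (cnt_ext A B a b (n - d)) by (intros; apply H; lia).
    pose proof (cnt_bounds A (a + (n - d)) d). pose proof (cnt_bounds B (b + (n - d)) d). lra.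
Qed.

Lemma cnt_ge_of_progression (A : nat -> Prop) a Q q : (1 <= Q)%nat ->
  (forall q', (q' < q)%nat -> A (a + q' * Q)%nat) -> INR q <= cnt A a (q * Q).
Proof.
  intros HQ. induction q as [|q IH]; intros H; [simpl; lra|].
  rewrite Nat.mul_succ_l, cnt_add, S_INR.
  assert (INR q <= cnt A a (q * Q)) by (apply IH; intros; apply H; lia).
  assert (1 <= cnt A (a + q * Q) Q).
  { apply Rle_trans with (cnt A (a + q * Q) 1); [|apply cnt_le_len; lia].
    simpl. rewrite Nat.add_0_r, indic_true by (apply H; lia). lra. }
  lra.
Qed.

(** * The metric *)

Definition geo (i : nat) : R := / 2 ^ (S i).

Lemma is_series_geo : is_series geo 1.
Proof.
  assert (H := is_series_geom (/2) ltac:(rewrite Rabs_pos_eq; lra)).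
  apply (is_series_scal (/2)) in H.
  replace 1 with (scal (/2) (/ (1 - /2))) by (unfold scal; simpl; unfold mult; simpl; field).
  eapply is_series_ext; [|exact H]. intros n. unfold geo, scal; simpl; unfold mult; simpl.
  rewrite pow_inv, Rinv_mult. ring.
Qed.

Lemma ex_series_geo : ex_series geo.
Proof. exists 1. apply is_series_geo. Qed.

Lemma geo_pos i : 0 < geo i.
Proof. apply Rinv_0_lt_compat, pow_lt; lra. Qed.

Lemma geo_add M i : geo (M + i) = / 2 ^ M * geo i.
Proof. unfold geo. rewrite <- Nat.add_succ_r, pow_add, Rinv_mult. ring. Qed.

Lemma pow2_inv_le_geo M i : (i < M)%nat -> / 2 ^ M <= geo i.
Proof.
  intros H. apply Rinv_le_contravar; [apply pow_lt; lra|]. apply Rle_pow; [lra|lia].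
Qed.

Definition dterm (x z : seqn) (i : nat) : R := delta (x i) (z i) / 2 ^ (S i).

Lemma dterm_bounds x z i : 0 <= dterm x z i <= geo i.
Proof.
  pose proof (geo_pos i). unfold dterm, geo, delta in *.
  destruct Nat.eq_dec; unfold Rdiv; lra.
Qed.

Lemma ex_series_dterm x z : ex_series (dterm x z).
Proof.
  apply (ex_series_le (dterm x z) geo); [|apply ex_series_geo].
  intros n. pose proof (dterm_bounds x z n).
  unfold norm; simpl; unfold abs; simpl. rewrite Rabs_pos_eq; lra.
Qed.

Lemma Series_nonneg a : (forall n, 0 <= a n) -> ex_series a -> 0 <= Series a.
Proof.
  intros H Hex. replace 0 with (Series (fun n => 0 * a n)) by (rewrite Series_scal_l; ring).
  apply Series_le; auto. intros n. rewrite Rmult_0_l. auto with real.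
Qed.

Lemma dist_le_of_agree x z M :
  (forall i, (i < M)%nat -> x i = z i) -> Defs.dist x z <= / 2 ^ M.
Proof.
  intros H. unfold Defs.dist; fold (dterm x z).
  rewrite (Series_incr_n_aux _ M).
  2: { intros i Hi. unfold dterm, delta. rewrite H by auto.
       destruct Nat.eq_dec; [|tauto]. unfold Rdiv; ring. }
  apply Rle_trans with (Series (fun i => / 2 ^ M * geo i)).
  - apply Series_le; [|apply (ex_series_scal_l (/ 2 ^ M) geo), ex_series_geo].
    intros n. pose proof (dterm_bounds x z (M + n)). rewrite <- geo_add. lra.
  - rewrite Series_scal_l, (is_series_unique _ _ is_series_geo). lra.
Qed.

Lemma geo_le_dist x z i : x i <> z i -> geo i <= Defs.dist x z.
Proof.
  intros H. unfold Defs.dist; fold (dterm x z).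
  rewrite (Series_incr_n _ (S i)) by (lia || apply ex_series_dterm). simpl Init.Nat.pred.
  assert (0 <= Series (fun j => dterm x z (S i + j))).
  { apply Series_nonneg; [intros; apply dterm_bounds|].
    apply (ex_series_incr_n (dterm x z) (S i)), ex_series_dterm. }
  assert (Hi : dterm x z i = geo i).
  { unfold dterm, delta, geo. destruct Nat.eq_dec; [tauto|]. unfold Rdiv; ring. }
  assert (geo i <= sum_f_R0 (dterm x z) i).
  { destruct i as [|j]; simpl; rewrite Hi; [lra|].
    pose proof (cond_pos_sum (dterm x z) j (fun n => proj1 (dterm_bounds x z n))). lra. }
  lra.
Qed.

Lemma agree_of_dist_lt x z M :
  Defs.dist x z < / 2 ^ M -> forall i, (i < M)%nat -> x i = z i.
Proof.
  intros H i Hi. destruct (Nat.eq_dec (x i) (z i)) as [e|n]; auto.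
  pose proof (geo_le_dist x z i n). pose proof (pow2_inv_le_geo M i Hi). lra.
Qed.

Lemma pow2_inv_pos M : 0 < / 2 ^ M.
Proof. apply Rinv_0_lt_compat, pow_lt; lra. Qed.

Lemma pow2_inv_S_lt M : / 2 ^ S M < / 2 ^ M.
Proof.
  apply Rinv_lt_contravar; [apply Rmult_lt_0_compat; apply pow_lt; lra|].
  simpl. pose proof (pow_lt 2 M). lra.
Qed.

Lemma exists_pow2_inv_lt eps : 0 < eps -> exists M, / 2 ^ M < eps.
Proof.
  intros H. destruct (pow_lt_1_zero (/2) ltac:(rewrite Rabs_pos_eq; lra) eps H) as [N HN].
  exists N. specialize (HN N (Nat.le_refl N)).
  rewrite <- pow_inv. rewrite Rabs_pos_eq in HN; auto. apply pow_le; lra.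
Qed.

(** * Limits of real sequences *)

Lemma eventually_le_mult (c a : R) : 0 < a -> exists N, forall n, (N <= n)%nat -> c <= a * INR n.
Proof.
  intros Ha. destruct (INR_archimed a c Ha) as [N HN]. exists N. intros n Hn.
  apply le_INR in Hn. nra.
Qed.

Lemma Sup_seq_const (c : R) : Sup_seq (fun _ => Finite c) = c.
Proof.
  apply is_sup_seq_unique. intros eps. pose proof (cond_pos eps). split.
  - intros; simpl; lra.
  - exists 0%nat; simpl; lra.
Qed.

Lemma Inf_seq_const (c : R) : Inf_seq (fun _ => Finite c) = c.
Proof.
  apply is_inf_seq_unique. intros eps. pose proof (cond_pos eps). split.
  - intros; simpl; lra.
  - exists 0%nat; simpl; lra.
Qed.

Lemma Inf_seq_le_term (u : nat -> R) n : Rbar_le (Inf_seq (fun m => Finite (u m))) (u n).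
Proof.
  rewrite Inf_opp_sup. apply (proj1 (Rbar_opp_le _ _)). rewrite Rbar_opp_involutive.
  apply Sup_seq_minor_le with n. simpl. lra.
Qed.

Lemma Rbar_lt_0_of_le (x : Rbar) d : 0 < d -> Rbar_le d x -> Rbar_lt 0 x.
Proof. intros H1 H2. eapply Rbar_lt_le_trans; [|exact H2]. simpl; auto. Qed.

Lemma Rbar_not_lt_0 (x : Rbar) : (forall e, 0 < e -> Rbar_le x e) -> ~ Rbar_lt 0 x.
Proof.
  intros H Hx. destruct x as [r| |]; simpl in *; auto.
  - assert (r <= r / 2) by (apply (H (r / 2)); lra). lra.
  - exact (H 1 Rlt_0_1).
Qed.

Lemma LimSup_seq_pos_iff (u : nat -> R) :
  Rbar_lt 0 (LimSup_seq u) <-> exists d, 0 < d /\ forall N, exists n, (N <= n)%nat /\ d <= u n.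
Proof.
  split.
  - intros H. apply NNPP. intros Hn. revert H. apply Rbar_not_lt_0. intros e He.
    rewrite <- (LimSup_seq_const e). apply LimSup_le.
    apply NNPP. intros Hc. apply Hn. exists e. split; auto. intros N.
    apply NNPP. intros Hc2. apply Hc. exists N. intros n Hn2.
    apply Rnot_lt_le. intros Hl. apply Hc2. exists n. split; auto; lra.
  - intros [d [Hd H]]. apply (Rbar_lt_0_of_le _ d Hd).
    rewrite LimSup_InfSup_seq, <- (Inf_seq_const d).
    apply Inf_seq_le. intros m. destruct (H m) as [n [Hn1 Hn2]].
    apply Sup_seq_minor_le with (n - m)%nat. simpl. replace (n - m + m)%nat with n by lia. auto.
Qed.

Lemma LimInf_seq_pos_iff (u : nat -> R) :
  Rbar_lt 0 (LimInf_seq u) <-> exists d, 0 < d /\ exists N, forall n, (N <= n)%nat -> d <= u n.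
Proof.
  split.
  - intros H. apply NNPP. intros Hn. revert H. apply Rbar_not_lt_0. intros e He.
    rewrite LimInf_SupInf_seq, <- (Sup_seq_const e). apply Sup_seq_le. intros m.
    assert (exists n, (m <= n)%nat /\ u n < e) as [n [Hn1 Hn2]].
    { apply NNPP. intros Hc. apply Hn. exists e. split; auto. exists m. intros n Hn1.
      apply Rnot_lt_le. intros Hl. apply Hc. exists n; auto. }
    eapply Rbar_le_trans; [apply (Inf_seq_le_term _ (n - m)%nat)|].
    simpl. replace (n - m + m)%nat with n by lia. lra.
  - intros [d [Hd [N H]]]. apply (Rbar_lt_0_of_le _ d Hd).
    rewrite <- (LimInf_seq_const d). apply LimInf_le. exists N. intros n Hn. apply H; auto.
Qed.

Lemma LimSup_seq_not_pos (u : nat -> R) : ~ Rbar_lt 0 (LimSup_seq u) ->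
  forall d, 0 < d -> exists N, forall n, (N <= n)%nat -> u n < d.
Proof.
  intros H d Hd. apply NNPP. intros Hn. apply H, LimSup_seq_pos_iff. exists d. split; auto.
  intros N. apply NNPP. intros Hm. apply Hn. exists N. intros n Hn'.
  apply Rnot_le_lt. intros Hl. apply Hm. exists n; auto.
Qed.

Lemma LimInf_seq_not_pos (u : nat -> R) : ~ Rbar_lt 0 (LimInf_seq u) ->
  forall d, 0 < d -> forall N, exists n, (N <= n)%nat /\ u n < d.
Proof.
  intros H d Hd N. apply NNPP. intros Hn. apply H, LimInf_seq_pos_iff. exists d. split; auto.
  exists N. intros n Hn'. apply Rnot_lt_le. intros Hl. apply Hn. exists n; auto.
Qed.

Lemma Lim_seq_pos_of_eventually_ge (v : nat -> R) d : 0 < d ->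
  (exists N, forall n, (N <= n)%nat -> d <= v n) -> Rbar_lt 0 (Lim_seq v).
Proof.
  intros Hd [N H]. apply (Rbar_lt_0_of_le _ d Hd).
  rewrite <- (Lim_seq_const d). apply Lim_seq_le_loc. exists N. intros n Hn. apply H; auto.
Qed.

Lemma Lim_seq_not_pos (v : nat -> R) :
  (forall e, 0 < e -> exists N, forall n, (N <= n)%nat -> v n <= e) -> ~ Rbar_lt 0 (Lim_seq v).
Proof.
  intros H. apply Rbar_not_lt_0. intros e He. destruct (H e He) as [N HN].
  rewrite <- (Lim_seq_const e). apply Lim_seq_le_loc. exists N. intros n Hn. apply HN; auto.
Qed.

Lemma Sup_seq_bounded (u : nat -> R) b : (forall m, 0 <= u m <= b) ->
  Sup_seq (fun m => Finite (u m)) = Finite (real (Sup_seq (fun m => Finite (u m)))).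
Proof.
  intros H.
  assert (H1 : Rbar_le (Sup_seq (fun m => Finite (u m))) b).
  { rewrite <- (Sup_seq_const b). apply Sup_seq_le. intros; simpl; apply H. }
  assert (H2 : Rbar_le (u 0%nat) (Sup_seq (fun m => Finite (u m)))).
  { apply Sup_seq_minor_le with 0%nat. apply Rbar_le_refl. }
  destruct (Sup_seq (fun m => Finite (u m))); simpl in *; tauto.
Qed.

Lemma real_Sup_seq_ge (u : nat -> R) b m : (forall m, 0 <= u m <= b) ->
  u m <= real (Sup_seq (fun m => Finite (u m))).
Proof.
  intros H.
  assert (H2 : Rbar_le (u m) (Sup_seq (fun m => Finite (u m)))).
  { apply Sup_seq_minor_le with m. apply Rbar_le_refl. }
  rewrite (Sup_seq_bounded u b H) in H2. exact H2.
Qed.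

Lemma real_Sup_seq_le (u : nat -> R) e : (forall m, 0 <= u m <= e) ->
  real (Sup_seq (fun m => Finite (u m))) <= e.
Proof.
  intros H.
  assert (H1 : Rbar_le (Sup_seq (fun m => Finite (u m))) e).
  { rewrite <- (Sup_seq_const e). apply Sup_seq_le. intros; simpl; apply H. }
  rewrite (Sup_seq_bounded u e H) in H1. exact H1.
Qed.

Lemma real_Inf_seq_le (u : nat -> R) m : (forall m, 0 <= u m) ->
  real (Inf_seq (fun m => Finite (u m))) <= u m.
Proof.
  intros H.
  assert (H1 : Rbar_le (Inf_seq (fun m => Finite (u m))) (u m)) by apply Inf_seq_le_term.
  assert (H2 : Rbar_le 0 (Inf_seq (fun m => Finite (u m)))).
  { rewrite <- (Inf_seq_const 0). apply Inf_seq_le. intros; simpl; apply H. }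
  destruct (Inf_seq (fun m => Finite (u m))); simpl in *; tauto.
Qed.

(** * The blocks of [T(y)] *)

Lemma length_concat_repeat (w : list nat) r : length (concat (repeat w r)) = (r * length w)%nat.
Proof. induction r as [|r IH]; simpl; auto. rewrite length_app, IH. lia. Qed.

Lemma nth_concat_repeat (w : list nat) R q r : (q < R)%nat -> (r < length w)%nat ->
  nth (q * length w + r) (concat (repeat w R)) 0%nat = nth r w 0%nat.
Proof.
  revert q. induction R as [|R IH]; intros q Hq Hr; [lia|]. simpl.
  destruct q as [|q]; simpl.
  - rewrite app_nth1 by lia. auto.
  - rewrite app_nth2 by lia. rewrite <- (IH q) by lia. f_equal. lia.
Qed.

Lemma length_prefixw y n : length (prefixw y n) = n.
Proof. unfold prefixw. rewrite length_map, length_seq. auto. Qed.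

Lemma nth_prefixw y n r : (r < n)%nat -> nth r (prefixw y n) 0%nat = y r.
Proof.
  intros H. unfold prefixw.
  rewrite (nth_indep _ 0%nat (y 0%nat)) by (rewrite length_map, length_seq; auto).
  rewrite map_nth, seq_nth by auto. auto.
Qed.

Lemma word_in_prefixw (P : seqn -> Prop) w M : P w -> word_in P (prefixw w M).
Proof.
  intros Hw. exists w. split; auto. intros i Hi.
  rewrite length_prefixw in Hi. rewrite nth_prefixw; auto.
Qed.

Section Blocks.
Local Open Scope nat_scope.
Variables (C : nat -> list nat) (A1 : list nat) (y : seqn).

Definition alen n := length (Aw C A1 y n).
Definition clen n := length (C n).
Local Notation t := (Tmap C A1 y).

Lemma alen_S n : alen (S n) = alen n + (clen n + S n * (alen n * alen n)) + alen n.
Proof.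
  unfold alen at 1. cbn [Aw]. rewrite !length_app, length_concat_repeat, length_prefixw.
  unfold alen, clen. lia.
Qed.

Lemma alen_mono n m : n <= m -> alen n <= alen m.
Proof. induction 1; auto. rewrite alen_S. lia. Qed.

Lemma Aw_prefix n m : n <= m -> forall i, i < alen n ->
  nth i (Aw C A1 y m) 0 = nth i (Aw C A1 y n) 0.
Proof.
  induction 1 as [|m H IH]; intros i Hi; auto.
  cbn [Aw]. rewrite app_nth1; [apply IH; auto|].
  pose proof (alen_mono n m H). unfold alen in *. lia.
Qed.

Hypothesis A1_ne : A1 <> nil.

Lemma alen_pos n : 1 <= alen n.
Proof.
  induction n as [|n IH]; [|rewrite alen_S; lia].
  unfold alen; simpl. destruct A1; simpl; [congruence|lia].
Qed.

Lemma alen_gt n : n < alen n.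
Proof. induction n; [apply alen_pos|]. rewrite alen_S. pose proof (alen_pos n). lia. Qed.

Lemma Tmap_prefix n i : i < alen n -> t i = nth i (Aw C A1 y n) 0.
Proof.
  intros H. unfold Tmap. destruct (le_lt_dec n (S i)) as [H1|H1].
  - apply Aw_prefix; auto.
  - symmetry. apply Aw_prefix; [lia|]. pose proof (alen_gt (S i)). lia.
Qed.

Lemma Tmap_block n i : i < alen (S n) -> t i = nth i
  (Aw C A1 y n ++ (C n ++ concat (repeat (prefixw y (S n)) (alen n * alen n))) ++ Aw C A1 y n) 0.
Proof. apply Tmap_prefix. Qed.

Lemma Tmap_C n i : i < clen n -> t (alen n + i) = nth i (C n) 0.
Proof.
  intros H. rewrite (Tmap_block n) by (rewrite alen_S; lia).
  unfold alen, clen in *. rewrite app_nth2, Nat.add_comm, Nat.add_sub by lia.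
  rewrite !app_nth1; auto. rewrite length_app. lia.
Qed.

Lemma Tmap_Y n q r : q < alen n * alen n -> r < S n ->
  t (alen n + clen n + (q * S n + r)) = y r.
Proof.
  intros Hq Hr. rewrite (Tmap_block n) by (rewrite alen_S; nia).
  rewrite app_nth2 by (unfold alen; lia).
  rewrite app_nth1 by (rewrite length_app, length_concat_repeat, length_prefixw;
                       unfold alen, clen in *; nia).
  rewrite app_nth2 by (unfold alen, clen; lia).
  replace (_ - _ - _) with (q * length (prefixw y (S n)) + r)
    by (rewrite length_prefixw; unfold alen, clen; lia).
  rewrite nth_concat_repeat by (rewrite ?length_prefixw; auto).
  apply nth_prefixw; auto.
Qed.

Lemma Tmap_second_copy n i : i < alen n ->
  t (alen n + (clen n + S n * (alen n * alen n)) + i) = t i.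
Proof.
  intros H. rewrite (Tmap_block n) by (rewrite alen_S; lia). rewrite (Tmap_prefix n) by auto.
  rewrite !app_nth2; rewrite ?length_app, ?length_concat_repeat, ?length_prefixw;
    unfold alen, clen in *; try lia.
  f_equal. lia.
Qed.

End Blocks.

(** * Occurrences of a prefix of [z] inside the runs of [Y_n] *)

Definition occurs (z : seqn) (K : nat) (x : seqn) (p : nat) : Prop :=
  forall i, (i < K)%nat -> x (p + i)%nat = z i.

Section Runs.
Variables (C : nat -> list nat) (A1 : list nat) (y z : seqn) (K : nat).
Hypothesis A1_ne : A1 <> nil.
Local Notation t := (Tmap C A1 y).
Local Notation P := (alen C A1 y).
Local Notation c := (clen C).
Local Notation G m := (cnt (occurs z K y) 0 m).

Lemma occurs_run_iff n q j : (q < P n * P n)%nat -> (j + K <= S n)%nat ->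
  (occurs z K t (P n + c n + (q * S n + j)) <-> occurs z K y j).
Proof.
  intros Hq Hj. unfold occurs.
  split; intros H i Hi; rewrite <- H by auto;
    replace (P n + c n + (q * S n + j) + i)%nat with (P n + c n + (q * S n + (j + i)))%nat by lia;
    [symmetry|]; apply (Tmap_Y C A1 y A1_ne); lia.
Qed.

Lemma cnt_run_copy_bounds n q r : (q < P n * P n)%nat -> (r <= S n)%nat ->
  cnt (occurs z K t) (P n + c n + q * S n) r <= G r + INR K /\
  G r <= cnt (occurs z K t) (P n + c n + q * S n) r + INR K.
Proof.
  intros Hq Hr. split; apply cnt_le_of_agree; intros i Hi; simpl; rewrite <- Nat.add_assoc;
    [|symmetry]; apply occurs_run_iff; lia.
Qed.

Lemma cnt_run_bounds n q : (q <= P n * P n)%nat ->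
  cnt (occurs z K t) (P n + c n) (q * S n) <= INR q * (G (S n) + INR K) /\
  INR q * (G (S n) - INR K) <= cnt (occurs z K t) (P n + c n) (q * S n).
Proof.
  induction q as [|q IH]; intros Hq; [simpl; lra|].
  rewrite Nat.mul_succ_l, cnt_add, S_INR.
  destruct (IH ltac:(lia)) as [I1 I2].
  destruct (cnt_run_copy_bounds n q (S n) ltac:(lia) ltac:(lia)) as [B1 B2].
  split; nra.
Qed.

Lemma cnt_run_prefix_bounds n q r :
  (q <= P n * P n)%nat -> (r <= S n)%nat -> (q < P n * P n \/ r = 0)%nat ->
  cnt (occurs z K t) (P n + c n) (q * S n + r) <= INR q * (G (S n) + INR K) + G r + INR K /\
  INR q * (G (S n) - INR K) + G r - INR K <= cnt (occurs z K t) (P n + c n) (q * S n + r).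
Proof.
  intros Hq Hr Hor. rewrite cnt_add. destruct (cnt_run_bounds n q Hq) as [M1 M2].
  pose proof (pos_INR K).
  destruct Hor as [Hor| ->]; [|rewrite !cnt_0; split; lra].
  destruct (cnt_run_copy_bounds n q r Hor Hr). split; lra.
Qed.

Lemma run_divmod n l : (l <= S n * (P n * P n))%nat ->
  exists q r, l = (q * S n + r)%nat /\ (q <= P n * P n)%nat /\ (r <= S n)%nat /\
    (q < P n * P n \/ r = 0)%nat.
Proof.
  intros H. exists (l / S n)%nat, (l mod S n)%nat.
  pose proof (Nat.div_mod_eq l (S n)). pose proof (Nat.mod_upper_bound l (S n) ltac:(lia)).
  assert (Hq : (l / S n <= P n * P n)%nat) by (apply Nat.Div0.div_le_upper_bound; lia).
  repeat split; try lia.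
  destruct (Nat.eq_dec (l / S n) (P n * P n)) as [e|e]; [right|left; lia].
  rewrite e in *. nia.
Qed.

Lemma cnt_run_upper a b n l : 0 <= a -> (forall m, G m <= a * INR m + b) ->
  (l <= S n * (P n * P n))%nat ->
  exists q, INR q * INR (S n) <= INR l /\
    cnt (occurs z K t) (P n + c n) l <= a * INR l + (INR q + 1) * (b + INR K).
Proof.
  intros Ha HG Hl. destruct (run_divmod n l Hl) as [q [r [-> [H1 [H2 H3]]]]].
  exists q. split; [rewrite <- mult_INR; apply le_INR; lia|].
  destruct (cnt_run_prefix_bounds n q r H1 H2 H3) as [U _].
  pose proof (HG (S n)). pose proof (HG r). pose proof (pos_INR q). pose proof (pos_INR r).
  rewrite plus_INR, mult_INR. nra.
Qed.

Lemma cnt_run_lower a b n l : 0 <= a -> (forall m, a * INR m - b <= G m) ->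
  (l <= S n * (P n * P n))%nat ->
  exists q, INR q * INR (S n) <= INR l /\
    a * INR l - (INR q + 1) * (b + INR K) <= cnt (occurs z K t) (P n + c n) l.
Proof.
  intros Ha HG Hl. destruct (run_divmod n l Hl) as [q [r [-> [H1 [H2 H3]]]]].
  exists q. split; [rewrite <- mult_INR; apply le_INR; lia|].
  destruct (cnt_run_prefix_bounds n q r H1 H2 H3) as [_ U].
  pose proof (HG (S n)). pose proof (HG r). pose proof (pos_INR q). pose proof (pos_INR r).
  rewrite plus_INR, mult_INR. nra.
Qed.

End Runs.

(** * Upper and lower densities of occurrences in [T(y)] *)

Section DensityTransfer.
Variables (C : nat -> list nat) (A1 : list nat) (y z : seqn) (K : nat).
Hypothesis A1_ne : A1 <> nil.
Hypothesis clen_small : forall e, 0 < e ->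
  exists N, forall n, (N <= n)%nat -> INR (clen C n) <= e * INR (alen C A1 y n).
Local Notation t := (Tmap C A1 y).
Local Notation P := (alen C A1 y).
Local Notation c := (clen C).
Local Notation F m := (cnt (occurs z K t) 0 m).
Local Notation G m := (cnt (occurs z K y) 0 m).
Local Notation run_end n := (P n + c n + S n * (P n * P n))%nat.
Local Notation run_cnt n := (cnt (occurs z K t) (P n + c n) (P n * P n * S n)).

Lemma alen_bracket n0 M : (P n0 < M)%nat -> exists n, (n0 <= n)%nat /\ (P n < M <= P (S n))%nat.
Proof.
  intros H.
  assert (Hd : forall d, (M <= P (n0 + d))%nat -> exists n, (n0 <= n)%nat /\ (P n < M <= P (S n))%nat).
  { induction d as [|d IH]; intros Hd; [rewrite Nat.add_0_r in Hd; lia|].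
    destruct (le_lt_dec M (P (n0 + d))) as [h|h]; auto.
    exists (n0 + d)%nat. rewrite Nat.add_succ_r in Hd. split; [lia|auto]. }
  apply (Hd M). pose proof (alen_gt C A1 y A1_ne (n0 + M)). lia.
Qed.

Lemma INR_alen_S n : INR (P (S n)) = 2 * INR (P n) + INR (c n) + INR (S n) * (INR (P n) * INR (P n)).
Proof. rewrite alen_S, !plus_INR, !mult_INR. ring. Qed.

Lemma alen_ge1 n : 1 <= INR (P n).
Proof. apply (le_INR 1), alen_pos; auto. Qed.

Lemma clen_le_alen : exists N, forall n, (N <= n)%nat -> INR (c n) <= INR (P n).
Proof. destruct (clen_small 1 Rlt_0_1) as [N HN]. exists N. intros n Hn. rewrite <- (Rmult_1_l (INR (P n))). auto. Qed.

Lemma cnt_run_end n : F (run_end n) = F (P n) + cnt (occurs z K t) (P n) (c n) + run_cnt n.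
Proof.
  rewrite <- Nat.add_assoc, !cnt_add, Nat.add_0_l.
  replace (S n * (P n * P n))%nat with (P n * P n * S n)%nat by lia. ring.
Qed.

Lemma cnt_alen_S n : F (P (S n)) = F (run_end n) + cnt (occurs z K t) (run_end n) (P n).
Proof.
  rewrite alen_S. replace (P n + (c n + S n * (P n * P n)) + P n)%nat with (run_end n + P n)%nat by lia.
  rewrite cnt_add. reflexivity.
Qed.

Lemma cnt_le_run_end n : run_cnt n <= F (run_end n).
Proof. apply cnt_le_subwindow; lia. Qed.

Lemma upper_density_transfer d : 0 < d ->
  (forall N, exists m, (N <= m)%nat /\ d * INR m <= G m) ->
  forall N, exists M, (N <= M)%nat /\ d / 4 * INR M <= F M.
Proof.
  intros Hd HG N.
  destruct clen_le_alen as [N1 HN1].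
  destruct (eventually_le_mult (2 * INR K) d Hd) as [N2 HN2].
  destruct (HG (N + N1 + N2 + 2)%nat) as [[|n] [Hm1 Hm2]]; [lia|].
  exists (run_end n). split; [pose proof (alen_gt C A1 y A1_ne n); nia|].
  pose proof (cnt_le_run_end n) as Hsub.
  destruct (cnt_run_bounds C A1 y z K A1_ne n (P n * P n) (Nat.le_refl _)) as [_ Mb].
  specialize (HN1 n ltac:(lia)). specialize (HN2 (S n) ltac:(lia)).
  pose proof (alen_ge1 n).
  assert (2 <= INR (S n)) by (apply (le_INR 2); lia).
  rewrite mult_INR in Mb. rewrite !plus_INR, !mult_INR.
  set (Pn := INR (P n)) in *. set (cn := INR (c n)) in *. set (p := INR (S n)) in *.
  assert (Pn * Pn * (d * p / 2) <= Pn * Pn * (G (S n) - INR K)) by (apply Rmult_le_compat_l; nra).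
  assert (2 * Pn <= p * (Pn * Pn)) by nra.
  nra.
Qed.

Lemma lower_density_transfer_zero :
  (forall e, 0 < e -> forall N, exists m, (N <= m)%nat /\ G m <= e * INR m + 1) ->
  forall e, 0 < e -> forall N, exists M, (N <= M)%nat /\ F M <= e * INR M.
Proof.
  intros HG e He N.
  destruct clen_le_alen as [N1 HN1].
  destruct (eventually_le_mult (8 + 4 * (1 + INR K)) e He) as [N2 HN2].
  destruct (HG (e / 4) ltac:(lra) (N + N1 + N2 + 2)%nat) as [[|n] [Hm1 Hm2]]; [lia|].
  exists (run_end n). split; [pose proof (alen_gt C A1 y A1_ne n); nia|].
  rewrite cnt_run_end.
  destruct (cnt_run_bounds C A1 y z K A1_ne n (P n * P n) (Nat.le_refl _)) as [Mb _].
  specialize (HN1 n ltac:(lia)). specialize (HN2 (S n) ltac:(lia)).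
  pose proof (alen_ge1 n). pose proof (pos_INR K).
  pose proof (cnt_bounds (occurs z K t) 0 (P n)).
  pose proof (cnt_bounds (occurs z K t) (P n) (c n)).
  rewrite mult_INR in Mb. rewrite !plus_INR, !mult_INR.
  set (Pn := INR (P n)) in *. set (cn := INR (c n)) in *. set (p := INR (S n)) in *.
  assert (run_cnt n <= Pn * Pn * (e / 4 * p + 1 + INR K)).
  { apply Rle_trans with (Pn * Pn * (G (S n) + INR K)); auto. apply Rmult_le_compat_l; nra. }
  nra.
Qed.

Lemma alen_cnt_small a b : 0 < a -> 0 <= b -> (forall m, G m <= a * INR m + b) ->
  exists n1, forall n, (n1 <= n)%nat -> F (P (S n)) <= 3 * a * INR (P (S n)).
Proof.
  intros Ha Hb HG.
  destruct clen_le_alen as [N1 HN1].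
  destruct (eventually_le_mult (3 + b + INR K) a Ha) as [N2 HN2].
  exists (N1 + N2)%nat. intros n Hn.
  rewrite cnt_alen_S, cnt_run_end, INR_alen_S.
  destruct (cnt_run_bounds C A1 y z K A1_ne n (P n * P n) (Nat.le_refl _)) as [Mb _].
  specialize (HN1 n ltac:(lia)). specialize (HN2 (S n) ltac:(lia)).
  pose proof (alen_ge1 n). pose proof (pos_INR K). pose proof (HG (S n)).
  pose proof (cnt_bounds (occurs z K t) 0 (P n)).
  pose proof (cnt_bounds (occurs z K t) (P n) (c n)).
  pose proof (cnt_bounds (occurs z K t) (run_end n) (P n)).
  rewrite mult_INR in Mb.
  set (Pn := INR (P n)) in *. set (cn := INR (c n)) in *. set (p := INR (S n)) in *.
  assert (run_cnt n <= Pn * Pn * (a * p + b + INR K)).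
  { apply Rle_trans with (Pn * Pn * (G (S n) + INR K)); auto. apply Rmult_le_compat_l; nra. }
  nra.
Qed.

Lemma alen_cnt_large d b : 0 < d -> 0 <= b -> (forall m, d * INR m - b <= G m) ->
  exists n1, forall n, (n1 <= n)%nat ->
    d / 2 * (INR (S n) * (INR (P n) * INR (P n))) <= run_cnt n /\
    d / 4 * INR (P (S n)) <= F (P (S n)).
Proof.
  intros Hd Hb HG.
  destruct clen_le_alen as [N1 HN1].
  destruct (eventually_le_mult (3 * d + 2 * (b + INR K)) d Hd) as [N2 HN2].
  exists (N1 + N2)%nat. intros n Hn.
  destruct (cnt_run_bounds C A1 y z K A1_ne n (P n * P n) (Nat.le_refl _)) as [_ Mb].
  specialize (HN1 n ltac:(lia)). specialize (HN2 (S n) ltac:(lia)).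
  pose proof (alen_ge1 n). pose proof (pos_INR K). pose proof (HG (S n)).
  assert (run_cnt n <= F (P (S n))) by (apply cnt_le_subwindow; rewrite ?alen_S; lia).
  rewrite mult_INR in Mb. rewrite INR_alen_S.
  set (Pn := INR (P n)) in *. set (cn := INR (c n)) in *. set (p := INR (S n)) in *.
  assert (Pn * Pn * (d * p - b - INR K) <= run_cnt n).
  { apply Rle_trans with (Pn * Pn * (G (S n) - INR K)); auto. apply Rmult_le_compat_l; nra. }
  assert (d / 2 * (p * (Pn * Pn)) <= run_cnt n).
  { assert (Pn * Pn * (d * p / 2) <= Pn * Pn * (d * p - b - INR K)) by (apply Rmult_le_compat_l; nra).
    nra. }
  assert (3 <= p) by nra.
  assert (3 * Pn <= p * (Pn * Pn)) by nra.
  split; [auto|nra].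
Qed.

Section UpperZero.
Variables (a b : R).
Hypothesis a_pos : 0 < a.
Hypothesis G_le : forall m, G m <= a * INR m + b.

Lemma cnt_le_in_level n M :
  F (P n) <= 3 * a * INR (P n) -> INR (c n) <= a * INR (P n) -> INR (c n) <= INR (P n) ->
  3 + b + INR K <= a * INR (S n) -> (S n <= P n)%nat -> (P n < M <= P (S n))%nat ->
  F M <= 8 * a * INR M.
Proof.
  intros FB c1 c1' HaS HpP [HM1 HM2]. apply le_INR in HpP.
  pose proof (alen_ge1 n). pose proof (pos_INR K) as K0.
  assert (0 <= b) by (pose proof (G_le 0%nat); simpl in *; lra).
  assert (HPM : INR (P n) <= INR M) by (apply le_INR; lia).
  destruct (le_lt_dec M (P n + c n)) as [C1|C1]; [|destruct (le_lt_dec M (run_end n)) as [C2|C2]].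
  - replace M with (P n + (M - P n))%nat by lia. rewrite cnt_add.
    pose proof (cnt_bounds (occurs z K t) (0 + P n) (M - P n)).
    assert (INR (M - P n) <= INR (c n)) by (apply le_INR; lia).
    rewrite plus_INR. pose proof (pos_INR (M - P n)). nra.
  - set (l := (M - (P n + c n))%nat).
    destruct (cnt_run_upper C A1 y z K A1_ne a b n l (Rlt_le _ _ a_pos) G_le ltac:(unfold l; lia))
      as [q [Hq1 Hq2]].
    replace M with (P n + (c n + l))%nat by (unfold l; lia). rewrite !cnt_add.
    replace (0 + P n + c n)%nat with (P n + c n)%nat by lia.
    pose proof (cnt_bounds (occurs z K t) (0 + P n) (c n)). rewrite !plus_INR.
    pose proof (pos_INR l). pose proof (pos_INR q).
    assert (INR q * (b + INR K) <= a * INR l) by nra.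
    assert (b + INR K <= a * INR (P n)) by nra.
    nra.
  - replace M with (run_end n + (M - run_end n))%nat by lia. rewrite cnt_add, cnt_run_end.
    pose proof (cnt_bounds (occurs z K t) (0 + run_end n) (M - run_end n)).
    assert (INR (M - run_end n) <= INR (P n)) by (apply le_INR; rewrite alen_S in HM2; lia).
    assert (INR (S n) * (INR (P n) * INR (P n)) <= INR M) by (rewrite <- !mult_INR; apply le_INR; lia).
    replace (run_end n + (M - run_end n))%nat with M by lia.
    destruct (cnt_run_bounds C A1 y z K A1_ne n (P n * P n) (Nat.le_refl _)) as [Mb _].
    pose proof (cnt_bounds (occurs z K t) (P n) (c n)). pose proof (G_le (S n)).
    rewrite mult_INR in Mb.
    set (Pn := INR (P n)) in *. set (p := INR (S n)) in *.
    assert (run_cnt n <= Pn * Pn * (a * p + b + INR K)).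
    { apply Rle_trans with (Pn * Pn * (G (S n) + INR K)); auto. apply Rmult_le_compat_l; nra. }
    assert (1 <= p) by (unfold p; rewrite S_INR; pose proof (pos_INR n); lra).
    assert (Pn <= p * (Pn * Pn)) by nra.
    nra.
Qed.

End UpperZero.

Lemma upper_density_transfer_zero :
  (forall e, 0 < e -> exists b, forall m, G m <= e * INR m + b) ->
  forall e, 0 < e -> exists N, forall M, (N <= M)%nat -> F M <= e * INR M.
Proof.
  intros HG e He. set (a := e / 8). assert (Ha : 0 < a) by (unfold a; lra).
  destruct (HG a Ha) as [b Hb].
  assert (0 <= b) by (pose proof (Hb 0%nat); simpl in *; lra).
  destruct (alen_cnt_small a b Ha ltac:(auto) Hb) as [n1 Hn1].
  destruct (clen_small a Ha) as [N1 HN1].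
  destruct clen_le_alen as [N1' HN1'].
  destruct (eventually_le_mult (3 + b + INR K) a Ha) as [N2 HN2].
  exists (S (P (n1 + N1 + N1' + N2 + 1))). intros M HM.
  destruct (alen_bracket (n1 + N1 + N1' + N2 + 1) M ltac:(lia)) as [[|n] [Hn HM']]; [lia|].
  replace e with (8 * a) by (unfold a; field).
  apply (cnt_le_in_level a b Ha Hb (S n) M); auto.
  - apply Hn1; lia.
  - apply HN1; lia.
  - apply HN1'; lia.
  - apply HN2; lia.
  - apply (alen_gt C A1 y A1_ne).
Qed.

Section LowerPos.
Variables (d b : R).
Hypothesis d_pos : 0 < d.
Hypothesis b_nonneg : 0 <= b.
Hypothesis G_ge : forall m, d * INR m - b <= G m.

Lemma cnt_ge_in_level n M :
  d / 4 * INR (P n) <= F (P n) -> d / 2 * (INR (S n) * (INR (P n) * INR (P n))) <= run_cnt n ->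
  INR (c n) <= INR (P n) -> 3 * d + 16 * (b + INR K) <= d * INR (S n) -> (S n <= P n)%nat ->
  (P n < M <= P (S n))%nat -> d / 16 * INR M <= F M.
Proof.
  intros FB FR c1 HdS HpP [HM1 HM2]. apply le_INR in HpP.
  pose proof (alen_ge1 n). pose proof (pos_INR K).
  assert (HMP : INR (P n) <= INR M) by (apply le_INR; lia).
  destruct (le_lt_dec M (P n + c n)) as [C1|C1]; [|destruct (le_lt_dec M (run_end n)) as [C2|C2]].
  - assert (F (P n) <= F M) by (apply cnt_le_len; lia).
    assert (INR M <= INR (P n) + INR (c n)) by (rewrite <- plus_INR; apply le_INR; lia).
    nra.
  - set (l := (M - (P n + c n))%nat).
    destruct (cnt_run_lower C A1 y z K A1_ne d b n l (Rlt_le _ _ d_pos) G_ge ltac:(unfold l; lia))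
      as [q [Hq1 Hq2]].
    assert (EM : M = (P n + (c n + l))%nat) by (unfold l; lia).
    assert (F (P n) + cnt (occurs z K t) (P n + c n) l <= F M).
    { rewrite EM, !cnt_add. replace (0 + P n + c n)%nat with (P n + c n)%nat by lia.
      pose proof (cnt_bounds (occurs z K t) (0 + P n) (c n)). lra. }
    assert (INR M = INR (P n) + INR (c n) + INR l) by (rewrite EM, !plus_INR; ring).
    pose proof (pos_INR l). pose proof (pos_INR q).
    assert (INR q * (b + INR K) <= d / 2 * INR l) by nra.
    nra.
  - assert (run_cnt n <= F M) by (apply cnt_le_subwindow; lia).
    assert (INR M <= INR (P (S n))) by (apply le_INR; lia).
    rewrite INR_alen_S in *.
    set (Pn := INR (P n)) in *. set (p := INR (S n)) in *.
    assert (3 <= p) by nra.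
    assert (3 * Pn <= p * (Pn * Pn)) by nra.
    nra.
Qed.

End LowerPos.

Lemma lower_density_transfer_pos d b : 0 < d -> (forall m, d * INR m - b <= G m) ->
  exists d', 0 < d' /\ exists N, forall M, (N <= M)%nat -> d' * INR M <= F M.
Proof.
  intros Hd HG0. set (b' := Rmax b 0).
  assert (HG : forall m, d * INR m - b' <= G m).
  { intros m. pose proof (HG0 m). pose proof (Rmax_l b 0). unfold b'. lra. }
  assert (Hb : 0 <= b') by apply Rmax_r.
  destruct (alen_cnt_large d b' Hd Hb HG) as [n1 Hn1].
  destruct clen_le_alen as [N1 HN1].
  destruct (eventually_le_mult (3 * d + 16 * (b' + INR K)) d Hd) as [N2 HN2].
  exists (d / 16). split; [lra|].
  exists (S (P (n1 + N1 + N2 + 1))). intros M HM.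
  destruct (alen_bracket (n1 + N1 + N2 + 1) M ltac:(lia)) as [[|n] [Hn HM']]; [lia|].
  apply (cnt_ge_in_level d b' Hd Hb HG (S n) M); auto.
  - apply Hn1; lia.
  - apply Hn1; lia.
  - apply HN1; lia.
  - apply HN2; lia.
  - apply (alen_gt C A1 y A1_ne).
Qed.

End DensityTransfer.

(** * Occurrences of a word avoided by [y] and by every [C_n] *)

Section Windows.
Variables (C : nat -> list nat) (A1 : list nat) (y z : seqn) (K' : nat).
Hypothesis A1_ne : A1 <> nil.
Local Notation K := (S K').
Local Notation t := (Tmap C A1 y).
Local Notation P := (alen C A1 y).
Local Notation c := (clen C).
Local Notation O := (occurs z K t).

(** Occurrences lying entirely inside the window [[a, a + m)]. *)
Definition inner_cnt a m := cnt O a (m - K').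

Lemma inner_cnt_bounds a m : 0 <= inner_cnt a m <= INR m.
Proof.
  unfold inner_cnt. pose proof (cnt_bounds O a (m - K')).
  assert (INR (m - K') <= INR m) by (apply le_INR; lia). lra.
Qed.

Lemma inner_cnt_split a m1 m2 :
  inner_cnt a (m1 + m2) <= inner_cnt a m1 + inner_cnt (a + m1) m2 + INR K'.
Proof.
  unfold inner_cnt. destruct (le_lt_dec K' m1) as [h|h].
  - replace (m1 + m2 - K')%nat with ((m1 - K') + m2)%nat by lia. rewrite cnt_add.
    replace (a + (m1 - K'))%nat with (a + m1 - K')%nat by lia.
    destruct (le_lt_dec K' m2) as [h2|h2].
    + replace m2 with (K' + (m2 - K'))%nat at 1 by lia. rewrite cnt_add.
      replace (a + m1 - K' + K')%nat with (a + m1)%nat by lia.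
      pose proof (cnt_bounds O (a + m1 - K') K'). lra.
    + pose proof (cnt_bounds O (a + m1 - K') m2). pose proof (cnt_bounds O (a + m1) (m2 - K')).
      assert (INR m2 <= INR K') by (apply le_INR; lia). lra.
  - apply Rle_trans with (cnt O a (m1 + (m2 - K'))); [apply cnt_le_len; lia|].
    rewrite cnt_add. pose proof (cnt_bounds O a m1). pose proof (cnt_bounds O a (m1 - K')).
    assert (INR m1 <= INR K') by (apply le_INR; lia). lra.
Qed.

Lemma inner_cnt_le_subwindow a m a' m' :
  (a' <= a)%nat -> (a + m <= a' + m')%nat -> inner_cnt a m <= inner_cnt a' m'.
Proof.
  intros H1 H2. unfold inner_cnt. destruct (le_lt_dec m K') as [h|h].
  - replace (m - K')%nat with 0%nat by lia. apply cnt_bounds.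
  - apply cnt_le_subwindow; lia.
Qed.

Lemma inner_cnt_zero a m : (forall i, (i + K <= m)%nat -> ~ O (a + i)) -> inner_cnt a m = 0.
Proof. intros H. apply cnt_zero. intros i Hi. apply H. lia. Qed.

Lemma inner_cnt_second_copy n a m : (a + m <= P n)%nat ->
  inner_cnt (P n + (c n + S n * (P n * P n)) + a) m = inner_cnt a m.
Proof.
  intros H. apply cnt_ext. intros i Hi. unfold occurs.
  split; intros H' j Hj; rewrite <- H' by auto;
    replace (P n + (c n + S n * (P n * P n)) + a + i + j)%nat
      with (P n + (c n + S n * (P n * P n)) + (a + i + j))%nat by lia;
    [symmetry|]; apply (Tmap_second_copy C A1 y A1_ne); lia.
Qed.

Hypothesis y_avoids : forall j, ~ occurs z K y j.
Hypothesis C_avoids : forall n i, (i + K <= c n)%nat -> ~ O (P n + i).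

Lemma inner_cnt_run_copy n q : (q < P n * P n)%nat ->
  inner_cnt (P n + c n + q * S n) (S n) = 0.
Proof.
  intros Hq. apply inner_cnt_zero. intros i Hi HO. apply (y_avoids i).
  apply (occurs_run_iff C A1 y z K A1_ne n q i Hq ltac:(lia)). rewrite <- Nat.add_assoc in HO.
  exact HO.
Qed.

Lemma inner_cnt_run_aligned n q0 Q : (q0 + Q <= P n * P n)%nat ->
  inner_cnt (P n + c n + q0 * S n) (Q * S n) <= INR K' * INR Q.
Proof.
  revert q0. induction Q as [|Q IH]; intros q0 H.
  - unfold inner_cnt. simpl. lra.
  - replace (S Q * S n)%nat with (S n + Q * S n)%nat by lia.
    eapply Rle_trans; [apply inner_cnt_split|]. rewrite inner_cnt_run_copy by lia.
    replace (P n + c n + q0 * S n + S n)%nat with (P n + c n + S q0 * S n)%nat by lia.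
    specialize (IH (S q0) ltac:(lia)). rewrite S_INR. lra.
Qed.

Lemma inner_cnt_in_run n a m : (P n + c n <= a)%nat -> (a + m <= P n + c n + S n * (P n * P n))%nat ->
  inner_cnt a m <= INR K' * INR m / INR (S n) + 2 * INR K'.
Proof.
  intros H1 H2. set (s := (P n + c n)%nat) in *.
  pose proof (Nat.div_mod_eq (a - s) (S n)).
  pose proof (Nat.mod_upper_bound (a - s) (S n) ltac:(lia)).
  pose proof (Nat.div_mod_eq (a + m - s + S n - 1) (S n)).
  pose proof (Nat.mod_upper_bound (a + m - s + S n - 1) (S n) ltac:(lia)).
  set (q0 := ((a - s) / S n)%nat) in *.
  set (q1 := ((a + m - s + S n - 1) / S n)%nat) in *.
  assert (q1 <= P n * P n)%nat.
  { assert (q1 < S (P n * P n))%nat; [|lia]. apply Nat.Div0.div_lt_upper_bound; nia. }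
  assert (q0 <= q1)%nat by (apply Nat.Div0.div_le_mono; lia).
  assert (inner_cnt a m <= inner_cnt (s + q0 * S n) ((q1 - q0) * S n))
    by (apply inner_cnt_le_subwindow; nia).
  pose proof (inner_cnt_run_aligned n q0 (q1 - q0) ltac:(lia)) as Ha. fold s in Ha.
  assert (Sp : 0 < INR (S n)) by (apply lt_0_INR; lia).
  assert (INR (q1 - q0) * INR (S n) <= INR m + 2 * INR (S n)).
  { rewrite <- mult_INR. replace (INR m + 2 * INR (S n)) with (INR (m + 2 * S n))
      by (rewrite plus_INR, mult_INR; simpl; ring).
    apply le_INR. nia. }
  assert (INR (q1 - q0) <= INR m / INR (S n) + 2).
  { apply (Rmult_le_reg_r (INR (S n))); auto. unfold Rdiv.
    rewrite Rmult_plus_distr_r, Rmult_assoc, Rinv_l by lra. lra. }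
  pose proof (pos_INR K').
  assert (INR K' * INR (q1 - q0) <= INR K' * (INR m / INR (S n) + 2)) by (apply Rmult_le_compat_l; lra).
  unfold Rdiv in *. lra.
Qed.

Lemma inner_cnt_after_A n a m : (P n <= a)%nat -> (a + m <= P n + c n + S n * (P n * P n))%nat ->
  inner_cnt a m <= INR K' * INR m / INR (S n) + 3 * INR K'.
Proof.
  intros H1 H2. set (s := (P n + c n)%nat) in *.
  assert (Sp : 0 < INR (S n)) by (apply lt_0_INR; lia).
  pose proof (pos_INR K'). pose proof (pos_INR m).
  assert (0 <= INR K' * INR m / INR (S n)) by (apply Rdiv_le_0_compat; nra).
  assert (HC : forall i, (a + i + K <= s)%nat -> ~ O (a + i)).
  { intros i Hi. replace (a + i)%nat with (P n + (a - P n + i))%nat by lia. apply C_avoids. lia. }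
  destruct (le_lt_dec (a + m) s) as [h|h].
  - rewrite inner_cnt_zero; [lra|]. intros i Hi. apply HC. lia.
  - destruct (le_lt_dec s a) as [h2|h2].
    + pose proof (inner_cnt_in_run n a m h2 H2). lra.
    + replace m with ((s - a) + (a + m - s))%nat by lia.
      eapply Rle_trans; [apply inner_cnt_split|].
      rewrite inner_cnt_zero by (intros i Hi; apply HC; lia).
      replace (a + (s - a))%nat with s by lia.
      pose proof (inner_cnt_in_run n s (a + m - s) (Nat.le_refl _) ltac:(lia)).
      assert (INR (a + m - s) <= INR (s - a + (a + m - s))) by (apply le_INR; lia).
      assert (INR K' * INR (a + m - s) / INR (S n) <= INR K' * INR (s - a + (a + m - s)) / INR (S n)).
      { apply Rmult_le_compat_r; [left; apply Rinv_0_lt_compat; lra|]. apply Rmult_le_compat_l; lra. }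
      lra.
Qed.

Definition prefix_bound e b n :=
  forall m, (m <= P n)%nat -> inner_cnt 0 m <= e * INR m + b.
Definition suffix_bound e b n :=
  forall a m, (a + m = P n)%nat -> inner_cnt a m <= e * INR m + b.
Definition window_bound e b n :=
  forall a m, (a + m <= P n)%nat -> inner_cnt a m <= e * INR m + b.

Section Step.
Variables (e b1 b2 : R) (n : nat).
Local Notation Md := (c n + S n * (P n * P n))%nat.
Hypothesis e_pos : 0 < e.
Hypothesis A_sparse : inner_cnt 0 (P n) <= e * INR (P n).
Hypothesis Y_long : INR K' / INR (S n) <= e / 2.
Hypothesis slack : 5 * INR K' <= e / 2 * INR Md.
Hypothesis b1_large : 4 * INR K' <= b1.
Hypothesis b2_large : 2 * b1 + 5 * INR K' <= b2.
Hypothesis prefix_n : prefix_bound e b1 n.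
Hypothesis suffix_n : suffix_bound e b1 n.
Hypothesis window_n : window_bound e b2 n.

Lemma alen_S_blocks : P (S n) = (P n + Md + P n)%nat.
Proof. rewrite alen_S. lia. Qed.

Lemma inner_cnt_middle a m : (P n <= a)%nat -> (a + m <= P n + Md)%nat ->
  inner_cnt a m <= e / 2 * INR m + 3 * INR K'.
Proof.
  intros H1 H2. pose proof (inner_cnt_after_A n a m H1 ltac:(lia)).
  assert (0 < INR (S n)) by (apply lt_0_INR; lia).
  assert (INR K' * INR m / INR (S n) <= e / 2 * INR m).
  { replace (INR K' * INR m / INR (S n)) with (INR K' / INR (S n) * INR m) by (field; lra).
    apply Rmult_le_compat_r; [apply pos_INR|lra]. }
  lra.
Qed.

Lemma inner_cnt_copy a m : (a + m <= P n)%nat -> inner_cnt (P n + Md + a) m = inner_cnt a m.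
Proof. apply inner_cnt_second_copy. Qed.

Lemma e_INR_nonneg m : 0 <= e * INR m.
Proof. apply Rmult_le_pos; [lra|apply pos_INR]. Qed.

Lemma prefix_bound_S : prefix_bound e b1 (S n).
Proof.
  intros m Hm. rewrite alen_S_blocks in Hm. pose proof (pos_INR K').
  destruct (le_lt_dec m (P n)) as [c1|c1]; [apply prefix_n; auto|].
  pose proof (inner_cnt_middle (0 + P n) (m - P n) ltac:(lia)).
  pose proof (e_INR_nonneg (m - P n)). pose proof (e_INR_nonneg (P n)).
  replace m with (P n + (m - P n))%nat by lia.
  eapply Rle_trans; [apply inner_cnt_split|].
  destruct (le_lt_dec m (P n + Md)) as [c2|c2].
  - specialize (H0 ltac:(lia)). rewrite (plus_INR (P n)). lra.
  - pose proof (inner_cnt_split (0 + P n) Md (m - P n - Md)) as S1.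
    replace (m - P n)%nat with (Md + (m - P n - Md))%nat by lia.
    replace (0 + P n + Md)%nat with (P n + Md + 0)%nat in S1 by lia.
    rewrite inner_cnt_copy in S1 by lia.
    pose proof (inner_cnt_middle (0 + P n) Md ltac:(lia) ltac:(lia)).
    pose proof (prefix_n (m - P n - Md)%nat ltac:(lia)).
    pose proof (e_INR_nonneg Md). rewrite (plus_INR (P n)), (plus_INR Md). lra.
Qed.

Lemma suffix_bound_S : suffix_bound e b1 (S n).
Proof.
  intros a m Ham. rewrite alen_S_blocks in Ham. pose proof (pos_INR K').
  destruct (le_lt_dec (P n + Md) a) as [c1|c1].
  { replace a with (P n + Md + (a - P n - Md))%nat by lia. rewrite inner_cnt_copy by lia.
    apply suffix_n. lia. }
  assert (Hlast : inner_cnt (P n + Md + 0) (P n) <= e * INR (P n))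
    by (rewrite inner_cnt_copy by lia; exact A_sparse).
  destruct (le_lt_dec (P n) a) as [c2|c2].
  - replace m with ((P n + Md - a) + P n)%nat by lia. eapply Rle_trans; [apply inner_cnt_split|].
    pose proof (inner_cnt_middle a (P n + Md - a) c2 ltac:(lia)).
    replace (a + (P n + Md - a))%nat with (P n + Md + 0)%nat by lia.
    pose proof (e_INR_nonneg (P n + Md - a)). rewrite plus_INR. lra.
  - replace m with ((P n - a) + (Md + P n))%nat by lia. eapply Rle_trans; [apply inner_cnt_split|].
    replace (a + (P n - a))%nat with (P n) by lia.
    pose proof (inner_cnt_split (P n) Md (P n)) as S1.
    replace (P n + Md)%nat with (P n + Md + 0)%nat in S1 by lia.
    pose proof (inner_cnt_middle (P n) Md (Nat.le_refl _) (Nat.le_refl _)).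
    pose proof (suffix_n a (P n - a)%nat ltac:(lia)).
    pose proof (e_INR_nonneg Md). pose proof (e_INR_nonneg (P n)).
    rewrite (plus_INR (P n - a)), (plus_INR Md). lra.
Qed.

Lemma window_bound_S : window_bound e b2 (S n).
Proof.
  intros a m Ham. rewrite alen_S_blocks in Ham. pose proof (pos_INR K').
  destruct (le_lt_dec (a + m) (P n)) as [c1|c1]; [apply window_n; auto|].
  destruct (le_lt_dec (P n + Md) a) as [c2|c2].
  { replace a with (P n + Md + (a - P n - Md))%nat by lia. rewrite inner_cnt_copy by lia.
    apply window_n. lia. }
  pose proof (e_INR_nonneg m).
  destruct (le_lt_dec (P n) a) as [c3|c3]; destruct (le_lt_dec (a + m) (P n + Md)) as [c4|c4].
  - pose proof (inner_cnt_middle a m c3 c4). lra.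
  - replace m with ((P n + Md - a) + (a + m - P n - Md))%nat by lia.
    eapply Rle_trans; [apply inner_cnt_split|].
    pose proof (inner_cnt_middle a (P n + Md - a) c3 ltac:(lia)).
    replace (a + (P n + Md - a))%nat with (P n + Md + 0)%nat by lia. rewrite inner_cnt_copy by lia.
    pose proof (prefix_n (a + m - P n - Md)%nat ltac:(lia)).
    pose proof (e_INR_nonneg (P n + Md - a)). rewrite plus_INR. lra.
  - replace m with ((P n - a) + (a + m - P n))%nat by lia.
    eapply Rle_trans; [apply inner_cnt_split|].
    replace (a + (P n - a))%nat with (P n) by lia.
    pose proof (inner_cnt_middle (P n) (a + m - P n) (Nat.le_refl _) ltac:(lia)).
    pose proof (suffix_n a (P n - a)%nat ltac:(lia)).
    pose proof (e_INR_nonneg (a + m - P n)). rewrite plus_INR. lra.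
  - replace m with ((P n - a) + (Md + (a + m - P n - Md)))%nat by lia.
    eapply Rle_trans; [apply inner_cnt_split|].
    replace (a + (P n - a))%nat with (P n) by lia.
    pose proof (inner_cnt_split (P n) Md (a + m - P n - Md)) as S1.
    replace (P n + Md)%nat with (P n + Md + 0)%nat in S1 by lia.
    rewrite inner_cnt_copy in S1 by lia.
    pose proof (inner_cnt_middle (P n) Md (Nat.le_refl _) (Nat.le_refl _)).
    pose proof (suffix_n a (P n - a)%nat ltac:(lia)).
    pose proof (prefix_n (a + m - P n - Md)%nat ltac:(lia)).
    pose proof (e_INR_nonneg (P n - a)). pose proof (e_INR_nonneg Md).
    pose proof (e_INR_nonneg (a + m - P n - Md)).
    rewrite (plus_INR (P n - a)), (plus_INR Md). lra.
Qed.

End Step.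

Definition window_bounds e b1 b2 n :=
  prefix_bound e b1 n /\ suffix_bound e b1 n /\ window_bound e b2 n.

Lemma window_bounds_base e b1 b2 n : 0 < e -> INR (P n) <= b1 -> INR (P n) <= b2 ->
  window_bounds e b1 b2 n.
Proof.
  intros He Hb1 Hb2.
  assert (Hb : forall b a m, INR (P n) <= b -> (a + m <= P n)%nat -> inner_cnt a m <= e * INR m + b).
  { intros b a m Hb Ham. pose proof (inner_cnt_bounds a m).
    assert (INR m <= INR (P n)) by (apply le_INR; lia).
    pose proof (e_INR_nonneg e He m). lra. }
  split; [|split]; [intros m Hm| intros a m Hm|intros a m Hm]; apply Hb; auto; lia.
Qed.

Hypothesis clen_small : forall e, 0 < e ->
  exists N, forall n, (N <= n)%nat -> INR (c n) <= e * INR (P n).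

Lemma inner_cnt_A_sparse e : 0 < e ->
  exists n1, forall n, (n1 < n)%nat -> inner_cnt 0 (P n) <= e * INR (P n).
Proof.
  intros He.
  assert (G0 : forall m, cnt (occurs z K y) 0 m <= e / 3 * INR m + 0).
  { intros m. rewrite cnt_zero by (intros; apply y_avoids).
    pose proof (e_INR_nonneg (e / 3) ltac:(lra) m). lra. }
  destruct (alen_cnt_small C A1 y z K A1_ne clen_small (e / 3) 0 ltac:(lra) (Rle_refl 0) G0)
    as [n1 Hn1].
  exists n1. intros [|n] Hn; [lia|].
  eapply Rle_trans; [apply (cnt_le_len _ _ _ (P (S n))); lia|]. specialize (Hn1 n ltac:(lia)). lra.
Qed.

Theorem occurs_window_sublinear : forall e, 0 < e ->
  exists b, forall a m, cnt O a m <= e * INR m + b.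
Proof.
  intros e He.
  destruct (inner_cnt_A_sparse e He) as [n1 Hn1].
  destruct (eventually_le_mult (10 * INR K') e He) as [N2 HN2].
  set (n0 := S (n1 + N2)). set (b1 := INR (P n0) + 4 * INR K'). set (b2 := 2 * b1 + 5 * INR K').
  pose proof (pos_INR K'). pose proof (pos_INR (P n0)).
  assert (Hinv : forall d, window_bounds e b1 b2 (n0 + d)).
  { induction d as [|d IH].
    - rewrite Nat.add_0_r. apply window_bounds_base; auto; unfold b2, b1; lra.
    - rewrite Nat.add_succ_r. destruct IH as [IPre [ISuf IGen]].
      set (n := (n0 + d)%nat) in *.
      assert (10 * INR K' <= e * INR (S n)) by (apply HN2; unfold n, n0; lia).
      assert (0 < INR (S n)) by (apply lt_0_INR; lia).
      assert (INR (S n) <= INR (c n + S n * (P n * P n))).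
      { apply le_INR. pose proof (alen_pos C A1 y A1_ne n). nia. }
      assert (e * INR (S n) <= e * INR (c n + S n * (P n * P n))) by (apply Rmult_le_compat_l; lra).
      split; [|split];
        [apply prefix_bound_S|apply suffix_bound_S|apply (window_bound_S e b1)]; auto;
        try (apply Hn1; unfold n, n0; lia);
        try (apply Rle_div_l; lra);
        subst b1 b2; lra. }
  exists (e * INR K' + b2). intros a m.
  destruct (Hinv (a + m + K')%nat) as [_ [_ IG]].
  pose proof (alen_gt C A1 y A1_ne (n0 + (a + m + K'))).
  specialize (IG a (m + K')%nat ltac:(lia)).
  unfold inner_cnt in IG. replace (m + K' - K')%nat with m in IG by lia.
  rewrite plus_INR in IG. lra.
Qed.

End Windows.

(** * Periodic points of [Pi_L] *)

Section Periodic.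
Local Open Scope nat_scope.
Variables (z : seqn) (M : nat).
Hypothesis M_pos : 1 <= M.

Definition other_symbol (a : nat) : nat := if a =? 0 then 1 else 0.

Lemma other_symbol_neq a : other_symbol a <> a.
Proof. unfold other_symbol. destruct (Nat.eqb_spec a 0); lia. Qed.

(** The word [z_0 ... z_(M-1)] repeated, with a separator [s <> z_0] appended
    to each copy when [z_(M-1) = z_0], so that no run crosses two copies. *)
Definition period := if z (M - 1) =? z 0 then S M else M.
Definition periodic (i : nat) : nat :=
  if i mod period <? M then z (i mod period) else other_symbol (z 0).

Lemma period_bounds : M <= period <= S M.
Proof. unfold period. destruct (_ =? _); lia. Qed.

Lemma periodic_low i : i mod period < M -> periodic i = z (i mod period).
Proof. intros H. unfold periodic. destruct (Nat.ltb_spec (i mod period) M); lia. Qed.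

Lemma periodic_agree q i : i < M -> periodic (q * period + i) = z i.
Proof.
  intros H. pose proof period_bounds.
  assert (E : (q * period + i) mod period = i) by (symmetry; apply (Nat.mod_unique _ _ q); lia).
  rewrite periodic_low; rewrite E; auto.
Qed.

Lemma periodic_equal_succ i : periodic i = periodic (i + 1) ->
  i mod period + 1 < M /\ (i + 1) mod period = i mod period + 1.
Proof.
  intros H. pose proof period_bounds.
  pose proof (Nat.div_mod_eq i period). pose proof (Nat.mod_upper_bound i period ltac:(lia)).
  set (r := i mod period) in *.
  assert (S1 : r + 1 < period -> (i + 1) mod period = r + 1)
    by (intros; symmetry; apply (Nat.mod_unique _ _ (i / period)); lia).
  assert (S2 : r + 1 = period -> (i + 1) mod period = 0)
    by (intros; symmetry; apply (Nat.mod_unique _ _ (S (i / period))); lia).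
  destruct (le_lt_dec M (r + 1)) as [h|h]; [exfalso|split; auto; apply S1; lia].
  pose proof (other_symbol_neq (z 0)).
  unfold periodic in H. fold r in H. unfold period in *.
  destruct (Nat.eqb_spec (z (M - 1)) (z 0)) as [e|e].
  - destruct (Nat.eq_dec r M) as [->|hr].
    + rewrite S2 in H by lia. simpl in H.
      destruct (Nat.ltb_spec M M); [lia|]. destruct (Nat.ltb_spec 0 M); [congruence|lia].
    + rewrite S1 in H by lia. replace r with (M - 1) in H by lia.
      destruct (Nat.ltb_spec (M - 1) M); [|lia]. destruct (Nat.ltb_spec (M - 1 + 1) M); [lia|].
      congruence.
  - rewrite S2 in H by lia. replace r with (M - 1) in H by lia.
    destruct (Nat.ltb_spec (M - 1) M); [|lia]. destruct (Nat.ltb_spec 0 M); [congruence|lia].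
Qed.

Lemma periodic_PiL k L : PiL k L z -> 2 <= k -> 2 <= L -> PiL k L periodic.
Proof.
  intros [Hs Hz] Hk HL. split.
  - intros i. unfold periodic, other_symbol.
    destruct (_ <? _); [apply Hs|]. destruct (_ =? _); lia.
  - intros i Hrun.
    assert (Hj : forall j, j < L -> (i + j) mod period = i mod period + j /\ i mod period + j < M).
    { induction j as [|j IH]; intros Hj.
      - rewrite Nat.add_0_r.
        assert (periodic i = periodic (i + 1)) by (symmetry; apply (Hrun 1); lia).
        destruct (periodic_equal_succ i); auto; lia.
      - destruct (IH ltac:(lia)) as [I1 I2].
        assert (periodic (i + j) = periodic (i + j + 1)).
        { rewrite <- Nat.add_assoc, !Hrun by lia. reflexivity. }
        destruct (periodic_equal_succ (i + j)); auto.
        rewrite Nat.add_succ_r, <- Nat.add_1_r. lia. }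
    apply (Hz (i mod period)). intros j Hjl.
    destruct (Hj j Hjl) as [E1 E2]. destruct (Hj 0 ltac:(lia)) as [E3 E4].
    rewrite Nat.add_0_r in E3, E4.
    rewrite <- E1, <- (periodic_low (i + j)), <- (periodic_low i) by lia.
    apply Hrun; auto.
Qed.

End Periodic.

Definition seq01 (i : nat) : nat := i mod 2.
Definition seq001 (i : nat) : nat := if i mod 3 =? 2 then 1 else 0.

Lemma seq01_PiL k L : (2 <= k)%nat -> (2 <= L)%nat -> PiL k L seq01.
Proof.
  intros Hk HL. split.
  - intros i. unfold seq01. pose proof (Nat.mod_upper_bound i 2). lia.
  - intros i H. specialize (H 1%nat ltac:(lia)). unfold seq01 in H.
    pose proof (Nat.div_mod_eq i 2). pose proof (Nat.mod_upper_bound i 2 ltac:(lia)).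
    pose proof (Nat.div_mod_eq (i + 1) 2). pose proof (Nat.mod_upper_bound (i + 1) 2 ltac:(lia)).
    lia.
Qed.

Lemma seq001_PiL k L : (2 <= k)%nat -> (3 <= L)%nat -> PiL k L seq001.
Proof.
  intros Hk HL. split.
  - intros i. unfold seq001. destruct (_ =? _); lia.
  - intros i H. pose proof (H 1%nat ltac:(lia)). pose proof (H 2%nat ltac:(lia)). unfold seq001 in *.
    pose proof (Nat.div_mod_eq i 3). pose proof (Nat.mod_upper_bound i 3 ltac:(lia)).
    pose proof (Nat.div_mod_eq (i + 1) 3). pose proof (Nat.mod_upper_bound (i + 1) 3 ltac:(lia)).
    pose proof (Nat.div_mod_eq (i + 2) 3). pose proof (Nat.mod_upper_bound (i + 2) 3 ltac:(lia)).
    destruct (Nat.eqb_spec (i mod 3) 2); destruct (Nat.eqb_spec ((i + 1) mod 3) 2);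
      destruct (Nat.eqb_spec ((i + 2) mod 3) 2); lia.
Qed.

(** Every 4-word of [seq01] alternates, every 4-word of [seq001] contains [00]. *)
Lemma seq01_or_seq001_avoids (z : seqn) :
  (forall i, ~ occurs z 4 seq01 i) \/ (forall i, ~ occurs z 4 seq001 i).
Proof.
  destruct (classic (exists i, occurs z 4 seq01 i)) as [[i Hi]|Hn].
  - right. intros i' Hi'. unfold occurs, seq01, seq001 in *.
    pose proof (Hi 0%nat ltac:(lia)). pose proof (Hi 1%nat ltac:(lia)).
    pose proof (Hi 2%nat ltac:(lia)). pose proof (Hi 3%nat ltac:(lia)).
    pose proof (Hi' 0%nat ltac:(lia)). pose proof (Hi' 1%nat ltac:(lia)).
    pose proof (Hi' 2%nat ltac:(lia)). pose proof (Hi' 3%nat ltac:(lia)).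
    pose proof (Nat.div_mod_eq (i + 0) 2). pose proof (Nat.mod_upper_bound (i + 0) 2 ltac:(lia)).
    pose proof (Nat.div_mod_eq (i + 1) 2). pose proof (Nat.mod_upper_bound (i + 1) 2 ltac:(lia)).
    pose proof (Nat.div_mod_eq (i + 2) 2). pose proof (Nat.mod_upper_bound (i + 2) 2 ltac:(lia)).
    pose proof (Nat.div_mod_eq (i + 3) 2). pose proof (Nat.mod_upper_bound (i + 3) 2 ltac:(lia)).
    pose proof (Nat.div_mod_eq (i' + 0) 3). pose proof (Nat.mod_upper_bound (i' + 0) 3 ltac:(lia)).
    pose proof (Nat.div_mod_eq (i' + 1) 3). pose proof (Nat.mod_upper_bound (i' + 1) 3 ltac:(lia)).
    pose proof (Nat.div_mod_eq (i' + 2) 3). pose proof (Nat.mod_upper_bound (i' + 2) 3 ltac:(lia)).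
    pose proof (Nat.div_mod_eq (i' + 3) 3). pose proof (Nat.mod_upper_bound (i' + 3) 3 ltac:(lia)).
    destruct (Nat.eqb_spec ((i' + 0) mod 3) 2); destruct (Nat.eqb_spec ((i' + 1) mod 3) 2);
      destruct (Nat.eqb_spec ((i' + 2) mod 3) 2); destruct (Nat.eqb_spec ((i' + 3) mod 3) 2); lia.
  - left. intros i Hi. apply Hn. exists i. auto.
Qed.

(** * Visits to cylinders *)

Lemma visits_of_occurs x z eps M p : occurs z (S M) x p -> (1 <= p)%nat -> / 2 ^ M <= eps ->
  visits x (Defs.ball z eps) p.
Proof.
  intros H Hp He. split; auto. unfold Defs.ball.
  assert (Defs.dist (shiftn p x) z <= / 2 ^ S M).
  { apply dist_le_of_agree. intros i Hi. unfold shiftn. rewrite Nat.add_comm. apply H; auto. }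
  pose proof (pow2_inv_S_lt M). lra.
Qed.

Lemma occurs_of_visits x z eps M p : visits x (Defs.ball z eps) p -> eps <= / 2 ^ M ->
  occurs z M x p.
Proof.
  intros [_ H] He i Hi. unfold Defs.ball in H.
  pose proof (agree_of_dist_lt (shiftn p x) z M ltac:(lra) i Hi). unfold shiftn in *.
  rewrite Nat.add_comm. auto.
Qed.

Definition contains_all_words (k L : nat) (x : seqn) : Prop :=
  forall w, PiL k L w -> forall M, exists p, (1 <= p)%nat /\ occurs w M x p.

Lemma contains_all_words_of_Trans k L y : Trans k L y -> contains_all_words k L y.
Proof.
  intros [_ HyT] w Hw M. apply HyT in Hw.
  destruct (Hw _ (pow2_inv_pos M) 1%nat) as [n [Hn Hd]]. exists n. split; auto.
  intros i Hi. pose proof (agree_of_dist_lt _ _ _ Hd i Hi). unfold shiftn in *.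
  rewrite Nat.add_comm. auto.
Qed.

Lemma cnt_visits_div_bounds x U m n : 0 <= cnt (visits x U) m (S n) / INR (S n) <= 1.
Proof.
  pose proof (cnt_bounds (visits x U) m (S n)). assert (0 < INR (S n)) by (apply lt_0_INR; lia).
  split; [apply Rdiv_le_0_compat; lra|]. apply Rle_div_l; lra.
Qed.

(** Following a periodic point of [Pi_L] that starts with [z_0 ... z_M]
    gives, inside every window, a visit every [period] steps. *)
Lemma BanachUpper_visits_pos k L x z : contains_all_words k L x -> PiL k L z ->
  (2 <= k)%nat -> (3 <= L)%nat ->
  forall eps, 0 < eps -> Rbar_lt 0 (density BanachUpper (visits x (Defs.ball z eps))).
Proof.
  intros Hx Hz Hk HL eps He. destruct (exists_pow2_inv_lt eps He) as [M0 HM0].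
  set (M := S M0). set (Q := period z M). assert (HM : (1 <= M)%nat) by (unfold M; lia).
  pose proof (periodic_PiL z M HM k L Hz Hk ltac:(lia)) as HP.
  pose proof (period_bounds z M HM) as QB. fold Q in QB.
  assert (Q0 : 0 < INR Q) by (apply lt_0_INR; lia).
  apply (Lim_seq_pos_of_eventually_ge _ (/ (2 * INR Q))); [apply Rinv_0_lt_compat; lra|].
  exists (2 * Q)%nat. intros n Hn.
  destruct (Hx _ HP (S n + M)%nat) as [p [Hp Hag]].
  set (q0 := (S n / Q)%nat).
  pose proof (Nat.div_mod_eq (S n) Q). pose proof (Nat.mod_upper_bound (S n) Q ltac:(lia)).
  assert (Hc : INR q0 <= cnt (visits x (Defs.ball z eps)) p (S n)).
  { apply Rle_trans with (cnt (visits x (Defs.ball z eps)) p (q0 * Q)).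
    - apply cnt_ge_of_progression; [lia|]. intros q' Hq'.
      apply (visits_of_occurs _ _ _ M0); [|lia|lra].
      intros i Hi. rewrite <- Nat.add_assoc, Hag by nia. apply periodic_agree; auto.
    - apply cnt_le_len. unfold q0. nia. }
  eapply Rle_trans; [|apply (real_Sup_seq_ge _ 1 (p - 1)%nat); intros; apply cnt_visits_div_bounds].
  cbv beta. replace (S (p - 1)) with p by lia.
  assert (0 < INR (S n)) by (apply lt_0_INR; lia).
  assert (INR (S n) <= INR q0 * INR Q + INR Q) by (rewrite <- mult_INR, <- plus_INR; apply le_INR; lia).
  assert (2 * INR Q <= INR (S n)) by (rewrite <- (mult_INR 2); apply le_INR; lia).
  apply Rle_div_r; [lra|]. apply (Rmult_le_reg_r (2 * INR Q)); [lra|].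
  replace (/ (2 * INR Q) * INR (S n) * (2 * INR Q)) with (INR (S n)) by (field; lra).
  assert (INR q0 * INR Q <= cnt (visits x (Defs.ball z eps)) p (S n) * INR Q)
    by (apply Rmult_le_compat_r; lra).
  lra.
Qed.

Lemma BanachLower_visits_not_pos k L x z : contains_all_words k L x -> (2 <= k)%nat -> (3 <= L)%nat ->
  exists eps, 0 < eps /\ ~ Rbar_lt 0 (density BanachLower (visits x (Defs.ball z eps))).
Proof.
  intros Hx Hk HL. exists (/ 2 ^ 4). split; [apply pow2_inv_pos|].
  assert (W : exists w, PiL k L w /\ forall i, ~ occurs z 4 w i).
  { destruct (seq01_or_seq001_avoids z); [exists seq01|exists seq001]; split; auto.
    - apply seq01_PiL; lia.
    - apply seq001_PiL; lia. }
  destruct W as [w [Hw Hdis]].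
  apply Lim_seq_not_pos. intros e He. exists 0%nat. intros n _.
  destruct (Hx w Hw (S n + 4)%nat) as [p [Hp Hag]].
  eapply Rle_trans; [apply (real_Inf_seq_le _ (p - 1)%nat); intros; apply cnt_visits_div_bounds|].
  cbv beta. replace (S (p - 1)) with p by lia. rewrite cnt_zero; [unfold Rdiv; rewrite Rmult_0_l; lra|].
  intros i Hi Hv. apply (Hdis i). intros j Hj.
  rewrite <- (occurs_of_visits x z _ 4 (p + i) Hv (Rle_refl _) j Hj).
  rewrite <- Nat.add_assoc. symmetry. apply Hag. lia.
Qed.

Lemma BanachUpper_visits_not_pos x z K :
  (forall e, 0 < e -> exists b, forall a m, cnt (occurs z K x) a m <= e * INR m + b) ->
  ~ Rbar_lt 0 (density BanachUpper (visits x (Defs.ball z (/ 2 ^ K)))).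
Proof.
  intros H. apply Lim_seq_not_pos. intros e He.
  destruct (H (e / 2) ltac:(lra)) as [b Hb].
  assert (0 <= b) by (pose proof (Hb 0%nat 0%nat); simpl in *; lra).
  destruct (eventually_le_mult b (e / 2) ltac:(lra)) as [N HN].
  exists N. intros n Hn. apply real_Sup_seq_le. intros m.
  split; [apply cnt_visits_div_bounds|].
  assert (cnt (visits x (Defs.ball z (/ 2 ^ K))) (S m) (S n) <= e / 2 * INR (S n) + b).
  { eapply Rle_trans; [|apply Hb]. apply cnt_mono. intros i Hi Hv.
    apply (occurs_of_visits x z _ K _ Hv (Rle_refl _)). }
  specialize (HN (S n) ltac:(lia)).
  assert (0 < INR (S n)) by (apply lt_0_INR; lia).
  apply Rle_div_l; lra.
Qed.

(** * Upper and lower densities of visits *)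

Definition freq (x z : seqn) (M n : nat) : R := cnt (occurs z M x) 1 (S n) / INR (S n).

Lemma cnt_div_mono (A B : nat -> Prop) : (forall p, (1 <= p)%nat -> A p -> B p) ->
  forall n, cnt A 1 (S n) / INR (S n) <= cnt B 1 (S n) / INR (S n).
Proof.
  intros H n. apply Rmult_le_compat_r; [left; apply Rinv_0_lt_compat, lt_0_INR; lia|].
  apply cnt_mono. intros i Hi HA. apply H; auto; lia.
Qed.

Lemma visits_le_freq x z M n :
  cnt (visits x (Defs.ball z (/ 2 ^ M))) 1 (S n) / INR (S n) <= freq x z M n.
Proof. apply cnt_div_mono. intros p _ Hv. apply (occurs_of_visits x z _ M p Hv (Rle_refl _)). Qed.

Lemma freq_le_visits x z eps M n : / 2 ^ M <= eps ->
  freq x z (S M) n <= cnt (visits x (Defs.ball z eps)) 1 (S n) / INR (S n).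
Proof. intros He. apply cnt_div_mono. intros p Hp HO. apply (visits_of_occurs x z eps M p); auto. Qed.

Lemma upper_density_visits_pos_iff x z :
  (forall eps, 0 < eps -> Rbar_lt 0 (density UpperD (visits x (Defs.ball z eps)))) <->
  (forall M, Rbar_lt 0 (LimSup_seq (freq x z M))).
Proof.
  split; intros H.
  - intros M. eapply Rbar_lt_le_trans; [exact (H _ (pow2_inv_pos M))|].
    apply LimSup_le. exists 0%nat. intros n _. apply visits_le_freq.
  - intros eps He. destruct (exists_pow2_inv_lt eps He) as [M HM].
    eapply Rbar_lt_le_trans; [exact (H (S M))|].
    apply LimSup_le. exists 0%nat. intros n _. apply freq_le_visits. lra.
Qed.

Lemma lower_density_visits_pos_iff x z :
  (forall eps, 0 < eps -> Rbar_lt 0 (density LowerD (visits x (Defs.ball z eps)))) <->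
  (forall M, Rbar_lt 0 (LimInf_seq (freq x z M))).
Proof.
  split; intros H.
  - intros M. eapply Rbar_lt_le_trans; [exact (H _ (pow2_inv_pos M))|].
    apply LimInf_le. exists 0%nat. intros n _. apply visits_le_freq.
  - intros eps He. destruct (exists_pow2_inv_lt eps He) as [M HM].
    eapply Rbar_lt_le_trans; [exact (H (S M))|].
    apply LimInf_le. exists 0%nat. intros n _. apply freq_le_visits. lra.
Qed.

Section Frequencies.
Variables (x z : seqn) (M : nat).
Local Notation G m := (cnt (occurs z M x) 0 m).

(** [freq] counts from position [1], [G] from position [0]. *)
Lemma freq_bounds n : G (S (S n)) - 1 <= INR (S n) * freq x z M n <= G (S (S n)).
Proof.
  unfold freq. replace (INR (S n) * (cnt (occurs z M x) 1 (S n) / INR (S n)))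
    with (cnt (occurs z M x) 1 (S n)) by (field; apply not_0_INR; lia).
  replace (S (S n)) with (1 + S n)%nat by lia. rewrite cnt_add, Nat.add_0_l.
  pose proof (cnt_bounds (occurs z M x) 0 1) as B. simpl INR in B. lra.
Qed.

Lemma freq_ge_of_cnt_ge d n : 0 < d -> d * INR (S (S n)) - 1 <= G (S (S n)) ->
  2 <= d / 2 * INR (S n) -> d / 2 <= freq x z M n.
Proof.
  intros Hd H1 H2. pose proof (freq_bounds n). assert (0 < INR (S n)) by (apply lt_0_INR; lia).
  apply (Rmult_le_reg_l (INR (S n))); auto. rewrite (S_INR (S n)) in H1. lra.
Qed.

Lemma cnt_ge_of_freq_ge d n : 0 < d -> d <= freq x z M n -> d / 2 * INR (S (S n)) <= G (S (S n)).
Proof.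
  intros Hd H. pose proof (freq_bounds n).
  assert (INR (S n) * d <= INR (S n) * freq x z M n) by (apply Rmult_le_compat_l; [apply pos_INR|lra]).
  rewrite !S_INR in *. pose proof (pos_INR n). nra.
Qed.

Lemma freq_lt_of_cnt_le e n : 0 < e -> G (S (S n)) <= e / 4 * INR (S (S n)) -> freq x z M n < e.
Proof.
  intros He H. pose proof (freq_bounds n). assert (0 < INR (S n)) by (apply lt_0_INR; lia).
  assert (e * 1 <= e * INR (S n)) by (apply Rmult_le_compat_l; [lra|apply (le_INR 1); lia]).
  apply (Rmult_lt_reg_l (INR (S n))); auto. rewrite (S_INR (S n)) in H. lra.
Qed.

Lemma cnt_le_of_freq_le e n : freq x z M n <= e -> G (S (S n)) <= e * INR (S (S n)) + 1.
Proof.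
  intros H. pose proof (freq_bounds n). pose proof (pos_INR n).
  assert (INR (S n) * freq x z M n <= INR (S n) * e) by (apply Rmult_le_compat_l; [apply pos_INR|lra]).
  assert (0 <= freq x z M n) by (apply Rdiv_le_0_compat; [apply cnt_bounds|apply lt_0_INR; lia]).
  rewrite !S_INR in *. nra.
Qed.

Lemma LimSup_freq_pos d : 0 < d -> (forall N, exists m, (N <= m)%nat /\ d * INR m <= G m) ->
  Rbar_lt 0 (LimSup_seq (freq x z M)).
Proof.
  intros Hd H. apply LimSup_seq_pos_iff. exists (d / 2). split; [lra|]. intros N.
  destruct (eventually_le_mult 2 (d / 2) ltac:(lra)) as [N2 HN2].
  destruct (H (N + N2 + 2)%nat) as [[|[|n]] [Hm1 Hm2]]; try lia.
  exists n. split; [lia|]. apply freq_ge_of_cnt_ge; [lra|lra|]. apply HN2. lia.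
Qed.

Lemma cnt_io_of_LimSup_freq_pos : Rbar_lt 0 (LimSup_seq (freq x z M)) ->
  exists d, 0 < d /\ forall N, exists m, (N <= m)%nat /\ d * INR m <= G m.
Proof.
  intros [d [Hd H]]%LimSup_seq_pos_iff. exists (d / 2). split; [lra|]. intros N.
  destruct (H N) as [n [Hn1 Hn2]]. exists (S (S n)). split; [lia|].
  apply cnt_ge_of_freq_ge; auto.
Qed.

Lemma LimSup_freq_not_pos : (forall e, 0 < e -> exists N, forall m, (N <= m)%nat -> G m <= e * INR m) ->
  ~ Rbar_lt 0 (LimSup_seq (freq x z M)).
Proof.
  intros H [d [Hd Hio]]%LimSup_seq_pos_iff.
  destruct (H (d / 4) ltac:(lra)) as [N HN]. destruct (Hio N) as [n [Hn1 Hn2]].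
  pose proof (freq_lt_of_cnt_le d n Hd (HN (S (S n)) ltac:(lia))). lra.
Qed.

Lemma cnt_sublinear_of_LimSup_freq_not_pos : ~ Rbar_lt 0 (LimSup_seq (freq x z M)) ->
  forall e, 0 < e -> exists b, forall m, G m <= e * INR m + b.
Proof.
  intros Hy e He. destruct (LimSup_seq_not_pos _ Hy e He) as [N HN]. exists (INR N + 3).
  intros m. destruct (le_lt_dec (N + 2) m) as [h|h].
  - destruct m as [|[|n]]; [lia|lia|].
    pose proof (cnt_le_of_freq_le e n (Rlt_le _ _ (HN n ltac:(lia)))). pose proof (pos_INR N). lra.
  - pose proof (cnt_bounds (occurs z M x) 0 m).
    assert (Hm : INR m <= INR (N + 3)) by (apply le_INR; lia). rewrite plus_INR in Hm. simpl INR in Hm.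
    pose proof (Rmult_le_pos e (INR m) (Rlt_le _ _ He) (pos_INR m)). lra.
Qed.

Lemma LimInf_freq_pos d : 0 < d -> (exists N, forall m, (N <= m)%nat -> d * INR m <= G m) ->
  Rbar_lt 0 (LimInf_seq (freq x z M)).
Proof.
  intros Hd [N H]. apply LimInf_seq_pos_iff. exists (d / 2). split; [lra|].
  destruct (eventually_le_mult 2 (d / 2) ltac:(lra)) as [N2 HN2].
  exists (N + N2)%nat. intros n Hn. apply freq_ge_of_cnt_ge; [lra| |apply HN2; lia].
  pose proof (H (S (S n)) ltac:(lia)). lra.
Qed.

Lemma cnt_linear_of_LimInf_freq_pos : Rbar_lt 0 (LimInf_seq (freq x z M)) ->
  exists d b, 0 < d /\ forall m, d * INR m - b <= G m.
Proof.
  intros [d [Hd [N H]]]%LimInf_seq_pos_iff. exists (d / 2), (d / 2 * (INR N + 2)). split; [lra|].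
  intros m. destruct (le_lt_dec (N + 2) m) as [h|h].
  - destruct m as [|[|n]]; [lia|lia|].
    pose proof (cnt_ge_of_freq_ge d n Hd (H n ltac:(lia))).
    pose proof (pos_INR N). assert (0 <= d / 2 * (INR N + 2)) by nra. lra.
  - pose proof (cnt_bounds (occurs z M x) 0 m).
    assert (Hm : INR m <= INR (N + 2)) by (apply le_INR; lia). rewrite plus_INR in Hm. simpl INR in Hm.
    assert (d / 2 * INR m <= d / 2 * (INR N + 2)) by (apply Rmult_le_compat_l; lra). lra.
Qed.

Lemma LimInf_freq_not_pos :
  (forall e, 0 < e -> forall N, exists m, (N <= m)%nat /\ G m <= e * INR m) ->
  ~ Rbar_lt 0 (LimInf_seq (freq x z M)).
Proof.
  intros H [d [Hd [N Hev]]]%LimInf_seq_pos_iff.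
  destruct (H (d / 4) ltac:(lra) (N + 2)%nat) as [[|[|n]] [Hm1 Hm2]]; try lia.
  pose proof (freq_lt_of_cnt_le d n Hd Hm2). pose proof (Hev n ltac:(lia)). lra.
Qed.

Lemma cnt_io_small_of_LimInf_freq_not_pos : ~ Rbar_lt 0 (LimInf_seq (freq x z M)) ->
  forall e, 0 < e -> forall N, exists m, (N <= m)%nat /\ G m <= e * INR m + 1.
Proof.
  intros Hy e He N. destruct (LimInf_seq_not_pos _ Hy e He N) as [n [Hn1 Hn2]].
  exists (S (S n)). split; [lia|]. apply cnt_le_of_freq_le. lra.
Qed.

End Frequencies.

(** * Omega-limit sets of [T(y)] *)

Section Omega.
Variables (k L : nat) (C : nat -> list nat) (A1 : list nat) (y : seqn).
Hypothesis k_ge2 : (2 <= k)%nat.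
Hypothesis L_ge3 : (3 <= L)%nat.
Hypothesis C_in_Pi : forall n, word_in (PiL k L) (C n).
Hypothesis C_onto : forall w, word_in (PiL k L) w -> exists n, C n = w.
Hypothesis A1_not_in_Pi : ~ word_in (PiL k L) A1.
Hypothesis y_trans : Trans k L y.
Hypothesis clen_small : forall e, 0 < e ->
  exists N, forall n, (N <= n)%nat -> INR (clen C n) <= e * INR (alen C A1 y n).
Local Notation t := (Tmap C A1 y).
Local Notation P := (alen C A1 y).

Lemma A1_nonempty : A1 <> nil.
Proof.
  intros HA. apply A1_not_in_Pi. rewrite HA. exists seq01. split; [apply seq01_PiL; lia|].
  intros i Hi. simpl in Hi. lia.
Qed.

Lemma Tmap_contains_all_words : contains_all_words k L t.
Proof.
  intros w Hw M. destruct (C_onto _ (word_in_prefixw _ w M Hw)) as [j Hj].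
  exists (P j). split; [apply alen_pos, A1_nonempty|]. intros i Hi.
  rewrite (Tmap_C C A1 y A1_nonempty) by (unfold clen; rewrite Hj, length_prefixw; auto).
  rewrite Hj. apply nth_prefixw; auto.
Qed.

Lemma omega_upper_Tmap_iff z : omega_xi k UpperD t z <-> omega_xi k UpperD y z.
Proof.
  unfold omega_xi; rewrite !upper_density_visits_pos_iff.
  split; intros [Hz H]; split; auto; intros M; specialize (H M).
  - apply NNPP. intros Hy. revert H. apply LimSup_freq_not_pos.
    apply (upper_density_transfer_zero C A1 y z M A1_nonempty clen_small).
    apply cnt_sublinear_of_LimSup_freq_not_pos; auto.
  - destruct (cnt_io_of_LimSup_freq_pos y z M H) as [d [Hd Hio]].
    apply (LimSup_freq_pos _ _ _ (d / 4)); [lra|].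
    apply (upper_density_transfer C A1 y z M A1_nonempty clen_small); auto.
Qed.

Lemma omega_lower_Tmap_iff z : omega_xi k LowerD t z <-> omega_xi k LowerD y z.
Proof.
  unfold omega_xi; rewrite !lower_density_visits_pos_iff.
  split; intros [Hz H]; split; auto; intros M; specialize (H M).
  - apply NNPP. intros Hy. revert H. apply LimInf_freq_not_pos.
    apply (lower_density_transfer_zero C A1 y z M A1_nonempty clen_small).
    apply cnt_io_small_of_LimInf_freq_not_pos; auto.
  - destruct (cnt_linear_of_LimInf_freq_pos y z M H) as [d [b [Hd Hlin]]].
    destruct (lower_density_transfer_pos C A1 y z M A1_nonempty clen_small d b Hd Hlin)
      as [d' [Hd' Hev]].
    apply (LimInf_freq_pos _ _ _ d'); auto.
Qed.

Lemma run_of_not_PiL z : inSigma k z -> ~ PiL k L z ->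
  exists i0, forall j, (j < L)%nat -> z (i0 + j)%nat = z i0.
Proof.
  intros Hs Hn. apply NNPP. intros Hc. apply Hn. split; auto. intros i Hi. apply Hc. exists i. auto.
Qed.

Lemma PiL_avoids_run x z i0 : PiL k L x -> (forall j, (j < L)%nat -> z (i0 + j)%nat = z i0) ->
  forall p, ~ occurs z (i0 + L) x p.
Proof.
  intros [_ Hx] Hr p HO. apply (Hx (p + i0)%nat). intros j Hj.
  replace (p + i0 + j)%nat with (p + (i0 + j))%nat by lia. rewrite HO, Hr by lia.
  replace (p + i0)%nat with (p + (i0 + 0))%nat by lia. rewrite HO by lia.
  rewrite Nat.add_0_r. reflexivity.
Qed.

Definition sparse_outside_Pi (x : seqn) : Prop :=
  forall z, inSigma k z -> ~ PiL k L z -> exists K, forall e, 0 < e ->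
    exists b, forall a m, cnt (occurs z K x) a m <= e * INR m + b.

Lemma omega_BanachUpper_iff_PiL x : contains_all_words k L x -> sparse_outside_Pi x ->
  forall z, omega_xi k BanachUpper x z <-> PiL k L z.
Proof.
  intros Hx Hsub z. split.
  - intros [Hz H]. apply NNPP. intros Hn. destruct (Hsub z Hz Hn) as [K HK].
    exact (BanachUpper_visits_not_pos x z K HK (H _ (pow2_inv_pos K))).
  - intros Hz. split; [apply Hz|]. apply (BanachUpper_visits_pos k L); auto.
Qed.

Lemma PiL_sparse_outside_Pi x : PiL k L x -> sparse_outside_Pi x.
Proof.
  intros Hx z Hs Hn. destruct (run_of_not_PiL z Hs Hn) as [i0 Hi0]. exists (i0 + L)%nat.
  intros e He. exists 0. intros a m. rewrite cnt_zero.
  - pose proof (Rmult_le_pos e (INR m) (Rlt_le _ _ He) (pos_INR m)). lra.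
  - intros i _. apply (PiL_avoids_run x z i0); auto.
Qed.

Lemma Tmap_sparse_outside_Pi : sparse_outside_Pi t.
Proof.
  intros z Hs Hn. destruct (run_of_not_PiL z Hs Hn) as [i0 Hi0].
  exists (S (i0 + L - 1)). apply (occurs_window_sublinear C A1 y z (i0 + L - 1) A1_nonempty); auto;
    replace (S (i0 + L - 1)) with (i0 + L)%nat by lia.
  - exact (PiL_avoids_run y z i0 (proj1 y_trans) Hi0).
  - intros n i Hi HO. destruct (C_in_Pi n) as [w [Hw Hwn]].
    apply (PiL_avoids_run w z i0 Hw Hi0 i). intros j Hj.
    rewrite <- (HO j Hj), <- Nat.add_assoc, (Tmap_C C A1 y A1_nonempty) by lia.
    apply Hwn. unfold clen in Hi. lia.
Qed.

Lemma omega_BanachUpper_Tmap_iff z : omega_xi k BanachUpper t z <-> omega_xi k BanachUpper y z.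
Proof.
  rewrite (omega_BanachUpper_iff_PiL t), (omega_BanachUpper_iff_PiL y); [reflexivity| | | |].
  - apply contains_all_words_of_Trans, y_trans.
  - exact (PiL_sparse_outside_Pi y (proj1 y_trans)).
  - apply Tmap_contains_all_words.
  - apply Tmap_sparse_outside_Pi.
Qed.

Lemma omega_BanachLower_empty x z : contains_all_words k L x -> ~ omega_xi k BanachLower x z.
Proof.
  intros Hx [_ H]. destruct (BanachLower_visits_not_pos k L x z Hx k_ge2 L_ge3) as [eps [He Hn]].
  exact (Hn (H eps He)).
Qed.

Lemma omega_sigma_of_recurrent x z : (forall M N, exists p, (N <= p)%nat /\ occurs z M x p) ->
  omega_sigma x z.
Proof.
  intros H eps He N. destruct (exists_pow2_inv_lt eps He) as [M HM].
  destruct (H M N) as [p [Hp HO]]. exists p. split; auto.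
  eapply Rle_lt_trans; [|exact HM]. apply dist_le_of_agree. intros i Hi. unfold shiftn.
  rewrite Nat.add_comm. apply HO; auto.
Qed.

Lemma Tmap_prefix_recurrent n N : exists p, (N <= p)%nat /\ occurs t (P n) t p.
Proof.
  set (m := (n + N)%nat). exists (P m + (clen C m + S m * (P m * P m)))%nat.
  pose proof (alen_gt C A1 y A1_nonempty m). pose proof (alen_mono C A1 y n m ltac:(lia)).
  split; [lia|]. intros i Hi. apply (Tmap_second_copy C A1 y A1_nonempty). lia.
Qed.

Lemma omega_sigma_Tmap_of_PiL z : PiL k L z -> omega_sigma t z.
Proof.
  intros Hz. apply omega_sigma_of_recurrent. intros M N.
  destruct (C_onto _ (word_in_prefixw _ z M Hz)) as [j Hj].
  assert (Hlen : clen C j = M) by (unfold clen; rewrite Hj; apply length_prefixw).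
  destruct (Tmap_prefix_recurrent (S j) N) as [p [Hp HO]]. exists (p + P j)%nat. split; [lia|].
  intros i Hi. rewrite <- Nat.add_assoc, HO by (rewrite alen_S; lia).
  rewrite (Tmap_C C A1 y A1_nonempty) by lia. rewrite Hj. apply nth_prefixw; auto.
Qed.

Lemma Tmap_in_omega_sigma : omega_sigma t t.
Proof.
  apply omega_sigma_of_recurrent. intros M N. destruct (Tmap_prefix_recurrent M N) as [p [Hp HO]].
  exists p. split; auto. intros i Hi. apply HO. pose proof (alen_gt C A1 y A1_nonempty M). lia.
Qed.

Lemma Tmap_not_PiL : ~ PiL k L t.
Proof.
  intros Ht. apply A1_not_in_Pi. exists t. split; auto. intros i Hi.
  apply (Tmap_prefix C A1 y A1_nonempty 0). auto.
Qed.

End Omega.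

Lemma clen_small_of_lim (C : nat -> list nat) (A1 : list nat) (y : seqn) : A1 <> nil ->
  is_lim_seq (fun n => INR (length (C n)) / INR (length (Aw C A1 y n))) 0 ->
  forall e, 0 < e -> exists N, forall n, (N <= n)%nat -> INR (clen C n) <= e * INR (alen C A1 y n).
Proof.
  intros A1_ne Hlim e He. apply is_lim_seq_spec in Hlim. destruct (Hlim (mkposreal e He)) as [N HN].
  exists N. intros n Hn. specialize (HN n Hn). simpl in HN.
  pose proof (alen_ge1 C A1 y A1_ne n) as P1. unfold alen, clen in *.
  rewrite Rminus_0_r in HN. apply Rabs_def2 in HN as [HN _].
  apply Rlt_div_l in HN; lra.
Qed.

Theorem lemma5p3 (k L : nat) (C : nat -> list nat) (A1 : list nat) (y : seqn) :
  (2 <= k)%nat -> (3 <= L)%nat ->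
  (* C is an enumeration of all finite words contained in Pi_L *)
  (forall n, word_in (PiL k L) (C n)) ->
  (forall w, word_in (PiL k L) w -> exists n, C n = w) ->
  (forall n m, C n = C m -> n = m) ->
  (* A_1 is a finite word over {0,...,k-1} not contained in Pi_L *)
  (forall a, In a A1 -> (a < k)%nat) ->
  ~ word_in (PiL k L) A1 ->
  (* |C_n| = o(|A_n|) *)
  is_lim_seq (fun n => INR (length (C n)) / INR (length (Aw C A1 y n))) 0 ->
  Trans k L y ->
  (forall xi z, omega_xi k xi (Tmap C A1 y) z <-> omega_xi k xi y z) /\
  ((forall z, omega_sigma y z -> omega_sigma (Tmap C A1 y) z) /\
   exists z, omega_sigma (Tmap C A1 y) z /\ ~ omega_sigma y z).
Proof.
  intros Hk HL HCw HCs _ _ HA1 Hlim Hy.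
  pose proof (A1_nonempty k L A1 Hk HL HA1) as A1_ne.
  pose proof (clen_small_of_lim C A1 y A1_ne Hlim) as Hc.
  split; [intros [] z|split].
  - apply (omega_upper_Tmap_iff k L); auto.
  - apply (omega_lower_Tmap_iff k L); auto.
  - apply (omega_BanachUpper_Tmap_iff k L); auto.
  - split; intros H; exfalso; revert H; apply (omega_BanachLower_empty k L); auto.
    + apply (Tmap_contains_all_words k L); auto.
    + apply contains_all_words_of_Trans; auto.
  - intros z Hz. apply (omega_sigma_Tmap_of_PiL k L); auto. apply Hy. auto.
  - exists (Tmap C A1 y). split; [apply (Tmap_in_omega_sigma k L); auto|].
    intros H%Hy. revert H. apply (Tmap_not_PiL k L); auto.
Qed.
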